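(* Let $G=(V,E,m,w)$ be a weighted graph admitting an intrinsic metric $\rho$ such that every ball $B_R(x)=\{y\in V:\rho(y,x)\le R\}$ ($x\in V$, $R>0$) is a finite set and the jump size $s:=\sup_{x\sim y}\rho(x,y)$ is finite. Suppose $G$ has polynomial volume growth with respect to $\rho$, i.e. there are $x_0\in V$ and constants $\alpha, C$ such that $m(B_R(x_0))\le C(1+R)^{\alpha}$ for all $R>0$. Then for all real $k\ge 1$, $$\dim \mathcal{P}_{2k}(G)\le (k+1)\dim \mathcal{H}_{2k}(G).$$
   Context: A weighted graph $G=(V,E,m,w)$ consists of a locally finite, simple, undirected, connected graph $(V,E)$, a symmetric edge weight $w:E\to(0,\infty)$, $\{x,y\}\mapsto w_{xy}=w_{yx}$ (extended by $w_{xy}=0$ if $x\not\sim y$), and a vertex weight $m:V\to(0,\infty)$; $m(\Omega)=\sum_{x\in\Omega}m_x$. The Laplacian is $\Delta f(x)=\sum_{y\sim x}\frac{w_{xy}}{m_x}(f(y)-f(x))$. A (pseudo)metric $\rho:V\times V\to[0,\infty)$ (symmetric, triangle inequality, $\rho(x,x)=0$) is intrinsic if $\sum_{y\sim x}w_{xy}\rho^2(x,y)\le m_x$ for all $x\in V$. $\mathcal{H}_k(G)$ is the space of functions $f$ on $V$ with $\Delta f=0$ such that there exist $x_0\in V$ and $C_f$ with $\sup_{x\in B_R(x_0)}|f(x)|\le C_f(1+R)^k$ for all $R>0$. An ancient solution of the heat equation is a function $u(x,t)$ on $V\times(-\infty,0]$, differentiable in $t$, with $\partial_t u(x,t)=\Delta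 u(x,t)$ for all $x\in V$, $t\le 0$. $\mathcal{P}_k(G)$ is the space of ancient solutions $u$ for which there are $x_0\in V$ and $C_u$ with $\sup_{(x,t)\in B_R(x_0)\times[-R^2,0]}|u(x,t)|\le C_u(1+R)^k$ for all $R>0$. *)

From Stdlib Require Import Reals List Relations.
From Coquelicot Require Import Coquelicot.
Open Scope R_scope.

Fixpoint lsum {A : Type} (F : A -> R) (l : list A) : R :=
  match l with nil => 0 | a :: l' => F a + lsum F l' end.

Fixpoint nsum (n : nat) (F : nat -> R) : R :=
  match n with O => 0 | S n' => nsum n' F + F n' end.

(* A weighted graph G = (V,E,m,w): locally finite, simple, undirected, connected.
   Local finiteness is encoded by a duplicate-free list [nbrs x] of the neighbours of x. *)
Record wgraph (V : Type) := WGraph {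
  adj : V -> V -> Prop;
  nbrs : V -> list V;
  ew : V -> V -> R;
  vm : V -> R;
  nbrs_nodup : forall x, NoDup (nbrs x);
  nbrs_spec : forall x y, In y (nbrs x) <-> adj x y;
  adj_sym : forall x y, adj x y -> adj y x;
  adj_irrefl : forall x, ~ adj x x;
  connected : forall x y, clos_refl_trans V adj x y;
  ew_sym : forall x y, ew x y = ew y x;
  ew_pos : forall x y, adj x y -> 0 < ew x y;
  ew_zero : forall x y, ~ adj x y -> ew x y = 0;
  vm_pos : forall x, 0 < vm x
}.
Arguments adj {V}. Arguments nbrs {V}. Arguments ew {V}. Arguments vm {V}.

Definition laplacian {V} (G : wgraph V) (f : V -> R) (x : V) : R :=
  lsum (fun y => ew G x y / vm G x * (f y - f x)) (nbrs G x).

Definition intrinsic_metric {V} (G : wgraph V) (rho : V -> V -> R) : Prop :=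
  (forall x y, 0 <= rho x y) /\
  (forall x, rho x x = 0) /\
  (forall x y, rho x y = rho y x) /\
  (forall x y z, rho x z <= rho x y + rho y z) /\
  (forall x, lsum (fun y => ew G x y * (rho x y) ^ 2) (nbrs G x) <= vm G x).

Definition in_ball {V} (rho : V -> V -> R) (x : V) (r : R) (y : V) : Prop := rho y x <= r.

Definition finite_balls {V} (rho : V -> V -> R) : Prop :=
  forall x r, 0 < r -> exists l : list V, forall y, in_ball rho x r y -> In y l.

Definition finite_jump_size {V} (G : wgraph V) (rho : V -> V -> R) : Prop :=
  exists s, forall x y, adj G x y -> rho x y <= s.

(* polynomial volume growth: m(B_R(x0)) <= C (1+R)^alpha for all R > 0;
   m(B_R(x0)) is the sum of m over an exact duplicate-free enumeration of the ball. *)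
Definition polynomial_volume_growth {V} (G : wgraph V) (rho : V -> V -> R) : Prop :=
  exists (x0 : V) (alpha C : R), forall r, 0 < r ->
    forall l : list V, NoDup l -> (forall y, In y l <-> in_ball rho x0 r y) ->
      lsum (vm G) l <= C * Rpower (1 + r) alpha.

Definition in_H {V} (G : wgraph V) (rho : V -> V -> R) (k : R) (f : V -> R) : Prop :=
  (forall x, laplacian G f x = 0) /\
  exists (x0 : V) (C : R), forall r, 0 < r ->
    forall x, in_ball rho x0 r x -> Rabs (f x) <= C * Rpower (1 + r) k.

(* ancient solution of the heat equation on V x (-oo, 0]; u is differentiable in t
   (two-sided for t < 0, from the left at t = 0) with ∂_t u = Δ u. *)
Definition ancient_solution {V} (G : wgraph V) (u : V -> R -> R) : Prop :=
  forall x t, t <= 0 ->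
    let L := laplacian G (fun y => u y t) x in
    filterlim (fun h => (u x (t + h) - u x t) / h) (at_left 0) (locally L) /\
    (t < 0 -> filterlim (fun h => (u x (t + h) - u x t) / h) (at_right 0) (locally L)).

Definition in_P {V} (G : wgraph V) (rho : V -> V -> R) (k : R) (u : V -> R -> R) : Prop :=
  ancient_solution G u /\
  exists (x0 : V) (C : R), forall r, 0 < r ->
    forall x t, in_ball rho x0 r x -> - r ^ 2 <= t <= 0 ->
      Rabs (u x t) <= C * Rpower (1 + r) k.

Definition has_indep {X : Type} (D : X -> Prop) (S : (X -> R) -> Prop) (n : nat) : Prop :=
  exists f : nat -> X -> R,
    (forall i, (i < n)%nat -> S (f i)) /\
    (forall c : nat -> R,
        (forall x, D x -> nsum n (fun i => c i * f i x) = 0) ->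
        forall i, (i < n)%nat -> c i = 0).

(* dim S1 <= a * dim S2 (dimensions in N ∪ {oo}, a > 0):
   every finite independent family in S1 of size N forces an independent family in S2
   of some size M with N <= a * M. *)
Definition dim_le_mul {X Y : Type} (D1 : X -> Prop) (S1 : (X -> R) -> Prop)
    (a : R) (D2 : Y -> Prop) (S2 : (Y -> R) -> Prop) : Prop :=
  forall N, has_indep D1 S1 N -> exists M, has_indep D2 S2 M /\ INR N <= a * INR M.

Definition spacetime_dom {V} (p : V * R) : Prop := snd p <= 0.
Definition P_space {V} (G : wgraph V) (rho : V -> V -> R) (k : R) (g : V * R -> R) : Prop :=
  exists u, in_P G rho k u /\ forall p, spacetime_dom p -> g p = u (fst p) (snd p).

(* Ancient solutions of polynomial growth are polynomials in time.  Caccioppoli estimates for the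
   heat equation, localized by cutoffs that are Lipschitz for the intrinsic metric and iterated,
   bound the L^2 mass of Lap^J U on B_r by r^(-4J) times the mass of U on B_(7^J r) over a longer
   time window; polynomial volume growth then forces Lap^J U = 0 for J large, and Taylor's formula
   gives U(x, t) = sum_(d < J) Lap^d U(x, 0) t^d / d!.  A polynomial bounded by C r^(2k) on
   [-r^2, 0] has its degree-d coefficient bounded by C' r^(2k - 2d), so by descending induction
   the coefficients of degree d > k vanish and the others are harmonic of growth 2k.  If
   dim H_2k = M, some M points separate H_2k; then the (K+1) M linear conditions
   Lap^d U(y, 0) = 0, with K = floor k and y among these points, force U = 0, whence
   dim P_2k <= (K+1) M <= (k+1) M. *)

From Stdlib Require Import Reals Lra Lia Psatz List Permutation Classical ClassicalEpsilon.
From Stdlib Require Import Factorial Binomial ZArith.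
From Coquelicot Require Import Coquelicot.
Open Scope R_scope.

Lemma lsum_ext {A} (F G : A -> R) l : (forall x, In x l -> F x = G x) -> lsum F l = lsum G l.
Proof. induction l; simpl; intros H; [lra|]. rewrite H, IHl by auto. lra. Qed.

Lemma lsum_plus {A} (F G : A -> R) l : lsum (fun x => F x + G x) l = lsum F l + lsum G l.
Proof. induction l; simpl; [lra|]. rewrite IHl; lra. Qed.

Lemma lsum_scal {A} (c : R) (F : A -> R) l : lsum (fun x => c * F x) l = c * lsum F l.
Proof. induction l; simpl; [lra|]. rewrite IHl; lra. Qed.

Lemma lsum_zero {A} (l : list A) : lsum (fun _ => 0) l = 0.
Proof. induction l; simpl; lra. Qed.

Lemma lsum_le {A} (F G : A -> R) l : (forall x, In x l -> F x <= G x) -> lsum F l <= lsum G l.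
Proof.
  induction l; simpl; intros H; [lra|].
  pose proof (H a (or_introl eq_refl)).
  assert (lsum F l <= lsum G l) by (apply IHl; auto). lra.
Qed.

Lemma lsum_nonneg {A} (F : A -> R) l : (forall x, In x l -> 0 <= F x) -> 0 <= lsum F l.
Proof. intros H. rewrite <- (lsum_zero l). apply lsum_le; auto. Qed.

Lemma lsum_perm {A} (F : A -> R) l1 l2 : Permutation l1 l2 -> lsum F l1 = lsum F l2.
Proof. induction 1; simpl; lra. Qed.

Lemma lsum_swap {A B} (F : A -> B -> R) l1 l2 :
  lsum (fun x => lsum (fun y => F x y) l2) l1 = lsum (fun y => lsum (fun x => F x y) l1) l2.
Proof.
  induction l1; simpl. { rewrite lsum_zero; reflexivity. }
  rewrite IHl1, <- lsum_plus. reflexivity.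
Qed.

Lemma in_split_perm {A} (a : A) l : In a l -> exists l', Permutation l (a :: l').
Proof.
  intros Ha. destruct (in_split a l Ha) as [p [q ->]].
  exists (p ++ q). symmetry. apply Permutation_middle.
Qed.

Lemma lsum_support {A} (F : A -> R) l1 l2 : NoDup l1 -> NoDup l2 ->
  (forall x, F x <> 0 -> (In x l1 <-> In x l2)) -> lsum F l1 = lsum F l2.
Proof.
  revert l2. induction l1 as [|a l1 IH]; intros l2 N1 N2 H.
  - simpl. rewrite <- (lsum_zero l2). apply lsum_ext. intros x Hx.
    destruct (Req_dec (F x) 0) as [E|E]; [now symmetry|]. apply H in E. simpl in E. tauto.
  - inversion N1; subst. simpl.
    destruct (classic (In a l2)) as [Ha|Ha].
    + destruct (in_split_perm a l2 Ha) as [l' P].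
      pose proof (Permutation_NoDup P N2) as N'. inversion N'; subst.
      rewrite (lsum_perm F _ _ P). simpl. rewrite (IH l'); auto.
      intros x Hx. specialize (H x Hx). split.
      * intros Hl. assert (In x (a :: l')) as [<-|] by (apply (Permutation_in _ P), H; simpl; auto);
          [contradiction|auto].
      * intros Hl.
        assert (In x (a :: l1)) as [<-|]
          by (apply H, (Permutation_in _ (Permutation_sym P)); simpl; auto);
          [contradiction|auto].
    + assert (F a = 0) as ->.
      { destruct (Req_dec (F a) 0); auto. exfalso. apply Ha, H; simpl; auto. }
      rewrite (IH l2); auto; [lra|].
      intros x Hx. specialize (H x Hx). simpl in H. split; [tauto|].
      intros Hl. destruct (proj2 H Hl) as [<-|]; [contradiction|auto].
Qed.

Lemma lsum_incl_le {A} (F : A -> R) l1 l2 : NoDup l1 -> incl l1 l2 ->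
  (forall x, In x l2 -> 0 <= F x) -> lsum F l1 <= lsum F l2.
Proof.
  revert l2. induction l1 as [|a l1 IH]; intros l2 N1 I H.
  - simpl. apply lsum_nonneg; auto.
  - inversion N1; subst. simpl.
    destruct (in_split_perm a l2 (I a (or_introl eq_refl))) as [l' P].
    rewrite (lsum_perm F _ _ P). simpl.
    assert (lsum F l1 <= lsum F l'); [|lra].
    apply IH; auto.
    + intros x Hx. assert (In x (a :: l')) as [<-|] by (apply (Permutation_in _ P), I; simpl; auto);
        [contradiction|auto].
    + intros x Hx. apply H, (Permutation_in _ (Permutation_sym P)). simpl; auto.
Qed.

Lemma nsum_ext n F G : (forall i, (i < n)%nat -> F i = G i) -> nsum n F = nsum n G.
Proof.
  induction n; simpl; intros H; [lra|].
  rewrite IHn by (intros; apply H; lia). rewrite H by lia. lra.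
Qed.

Lemma nsum_plus n F G : nsum n (fun i => F i + G i) = nsum n F + nsum n G.
Proof. induction n; simpl; [lra|]. rewrite IHn; lra. Qed.

Lemma nsum_minus n F G : nsum n (fun i => F i - G i) = nsum n F - nsum n G.
Proof. induction n; simpl; [lra|]. rewrite IHn; lra. Qed.

Lemma nsum_scal n c F : nsum n (fun i => c * F i) = c * nsum n F.
Proof. induction n; simpl; [lra|]. rewrite IHn; lra. Qed.

Lemma nsum_zero n : nsum n (fun _ => 0) = 0.
Proof. induction n; simpl; lra. Qed.

Lemma nsum_le n F G : (forall i, (i < n)%nat -> F i <= G i) -> nsum n F <= nsum n G.
Proof.
  induction n; simpl; intros H; [lra|].
  assert (nsum n F <= nsum n G) by (apply IHn; intros; apply H; lia).
  assert (F n <= G n) by (apply H; lia). lra.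
Qed.

Lemma nsum_abs n F : Rabs (nsum n F) <= nsum n (fun i => Rabs (F i)).
Proof.
  induction n; simpl. { rewrite Rabs_R0; lra. }
  eapply Rle_trans; [apply Rabs_triang|]. lra.
Qed.

Lemma nsum_shift n F : nsum (S n) F = F 0%nat + nsum n (fun i => F (S i)).
Proof. induction n; simpl in *; [lra|]. rewrite IHn. lra. Qed.

Lemma nsum_lsum {A} n (F : nat -> A -> R) l :
  nsum n (fun i => lsum (F i) l) = lsum (fun x => nsum n (fun i => F i x)) l.
Proof.
  induction n; simpl. { rewrite lsum_zero; reflexivity. }
  rewrite IHn, <- lsum_plus. reflexivity.
Qed.

Lemma nsum_swap n m (F : nat -> nat -> R) :
  nsum n (fun i => nsum m (fun j => F i j)) = nsum m (fun j => nsum n (fun i => F i j)).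
Proof.
  induction n; simpl. { rewrite nsum_zero; reflexivity. }
  rewrite IHn, <- nsum_plus. reflexivity.
Qed.

Lemma nsum_single n k c : (k < n)%nat ->
  nsum n (fun i => if Nat.eq_dec i k then c else 0) = c.
Proof.
  induction n; intros H; simpl; [lia|].
  destruct (Nat.eq_dec n k).
  - subst. rewrite (nsum_ext _ _ (fun _ => 0)), nsum_zero; [lra|].
    intros i Hi. destruct (Nat.eq_dec i k); [lia|auto].
  - rewrite IHn by lia. lra.
Qed.

Lemma nsum_truncate (F : nat -> R) J D : (D < J)%nat ->
  (forall d, (D < d)%nat -> (d < J)%nat -> F d = 0) -> nsum J F = nsum (S D) F.
Proof.
  induction J; intros H Hz; [lia|].
  destruct (Nat.eq_dec J D) as [->|Hne]; [reflexivity|].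
  simpl nsum at 1. rewrite IHJ by (try lia; intros; apply Hz; lia). rewrite (Hz J) by lia. ring.
Qed.

Lemma ew_nonneg {V} (G : wgraph V) x y : 0 <= ew G x y.
Proof.
  destruct (classic (adj G x y)); [apply Rlt_le, ew_pos; auto|].
  rewrite ew_zero; auto; lra.
Qed.

Lemma ew_neq0_adj {V} (G : wgraph V) x y : ew G x y <> 0 -> adj G x y.
Proof. intros H. apply NNPP. intros A. apply H, ew_zero, A. Qed.

Lemma laplacian_mul_vm {V} (G : wgraph V) f x :
  vm G x * laplacian G f x = lsum (fun y => ew G x y * (f y - f x)) (nbrs G x).
Proof.
  unfold laplacian. rewrite <- lsum_scal. apply lsum_ext. intros y _.
  pose proof (vm_pos _ G x). field. lra.
Qed.

Lemma laplacian_ext {V} (G : wgraph V) f g x : (forall y, f y = g y) -> laplacian G f x = laplacian G g x.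
Proof. intros H. unfold laplacian. apply lsum_ext. intros. rewrite !H. reflexivity. Qed.

Lemma laplacian_lin {V} (G : wgraph V) a b f g x :
  laplacian G (fun y => a * f y + b * g y) x = a * laplacian G f x + b * laplacian G g x.
Proof. unfold laplacian. rewrite <- !lsum_scal, <- lsum_plus. apply lsum_ext. intros; ring. Qed.

Lemma laplacian_nsum {V} (G : wgraph V) n (c : nat -> R) (f : nat -> V -> R) x :
  laplacian G (fun y => nsum n (fun i => c i * f i y)) x = nsum n (fun i => c i * laplacian G (f i) x).
Proof.
  unfold laplacian.
  transitivity (lsum (fun y => nsum n (fun i => c i * (ew G x y / vm G x * (f i y - f i x)))) (nbrs G x)).
  - apply lsum_ext. intros y _. rewrite <- nsum_minus, <- nsum_scal. apply nsum_ext. intros; ring.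
  - rewrite <- nsum_lsum. apply nsum_ext. intros. rewrite <- lsum_scal. reflexivity.
Qed.

Definition lapn {V} (G : wgraph V) (n : nat) (f : V -> R) : V -> R := Nat.iter n (laplacian G) f.

Lemma lapn_S_r {V} (G : wgraph V) n f : lapn G (S n) f = lapn G n (laplacian G f).
Proof. unfold lapn. rewrite Nat.iter_succ_r. reflexivity. Qed.

Lemma lapn_ext {V} (G : wgraph V) n f g : (forall y, f y = g y) -> forall x, lapn G n f x = lapn G n g x.
Proof. induction n; intros H x; simpl; [apply H|]. apply laplacian_ext. intros; apply IHn; auto. Qed.

Lemma lapn_nsum {V} (G : wgraph V) k n (c : nat -> R) (f : nat -> V -> R) x :
  lapn G k (fun y => nsum n (fun i => c i * f i y)) x = nsum n (fun i => c i * lapn G k (f i) x).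
Proof.
  revert x. induction k; intros x; simpl; [reflexivity|].
  rewrite (laplacian_ext G _ (fun y => nsum n (fun i => c i * lapn G k (f i) y))) by (intros; apply IHk).
  apply laplacian_nsum.
Qed.

Definition esum {V} (G : wgraph V) (L : list V) (F : V -> V -> R) : R :=
  lsum (fun x => lsum (fun y => ew G x y * F x y) (nbrs G x)) L.

Lemma esum_plus {V} (G : wgraph V) L F1 F2 :
  esum G L (fun x y => F1 x y + F2 x y) = esum G L F1 + esum G L F2.
Proof.
  unfold esum. rewrite <- lsum_plus. apply lsum_ext. intros.
  rewrite <- lsum_plus. apply lsum_ext. intros; ring.
Qed.

Lemma esum_scal {V} (G : wgraph V) L c F : esum G L (fun x y => c * F x y) = c * esum G L F.
Proof.
  unfold esum. rewrite <- lsum_scal. apply lsum_ext. intros.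
  rewrite <- lsum_scal. apply lsum_ext. intros; ring.
Qed.

Lemma esum_le {V} (G : wgraph V) L F1 F2 :
  (forall x y, adj G x y -> F1 x y <= F2 x y) -> esum G L F1 <= esum G L F2.
Proof.
  intros H. unfold esum. apply lsum_le. intros x _. apply lsum_le. intros y Hy.
  apply nbrs_spec in Hy. apply Rmult_le_compat_l; [apply ew_nonneg|auto].
Qed.

Lemma esum_nonneg {V} (G : wgraph V) L F : (forall x y, adj G x y -> 0 <= F x y) -> 0 <= esum G L F.
Proof.
  intros H. unfold esum. apply lsum_nonneg. intros x _. apply lsum_nonneg. intros y Hy.
  apply nbrs_spec in Hy. apply Rmult_le_pos; [apply ew_nonneg|auto].
Qed.

Lemma esum_ext {V} (G : wgraph V) L F1 F2 :
  (forall x y, adj G x y -> F1 x y = F2 x y) -> esum G L F1 = esum G L F2.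
Proof.
  intros H. unfold esum. apply lsum_ext. intros x _. apply lsum_ext. intros y Hy.
  apply nbrs_spec in Hy. rewrite H; auto.
Qed.

Lemma esum_swap {V} (G : wgraph V) (F : V -> V -> R) L : NoDup L ->
  (forall x y, adj G x y -> (F x y <> 0 \/ F y x <> 0) -> In x L) ->
  esum G L F = esum G L (fun x y => F y x).
Proof.
  intros ND HF.
  assert (E : forall F' : V -> V -> R, (forall x y, adj G x y -> F' x y <> 0 -> In y L) ->
     forall x, In x L -> lsum (fun y => ew G x y * F' x y) (nbrs G x) = lsum (fun y => ew G x y * F' x y) L).
  { intros F' HF' x Hx. apply lsum_support; [apply nbrs_nodup|auto|].
    intros y Hy. assert (A : adj G x y) by (apply ew_neq0_adj; intros E; apply Hy; rewrite E; ring).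
    split; intros _; [|apply nbrs_spec; auto].
    apply (HF' x y A). intros E; apply Hy; rewrite E; ring. }
  unfold esum.
  rewrite (lsum_ext _ (fun x => lsum (fun y => ew G x y * F x y) L)).
  2:{ intros x Hx. apply (E F); auto. intros x0 y A Hk. apply (HF y x0 (adj_sym _ _ _ _ A)). auto. }
  rewrite (lsum_ext (fun x => lsum (fun y => ew G x y * F y x) (nbrs G x))
                    (fun x => lsum (fun y => ew G x y * F y x) L)).
  2:{ intros x Hx. apply (E (fun a b => F b a)); auto.
      intros x0 y A Hk. apply (HF y x0 (adj_sym _ _ _ _ A)). auto. }
  rewrite lsum_swap. apply lsum_ext. intros x _. apply lsum_ext. intros y _. rewrite ew_sym. reflexivity.
Qed.

Definition supported_in {V} (G : wgraph V) (L : list V) (g : V -> R) : Prop :=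
  forall x, g x <> 0 -> In x L /\ forall y, adj G x y -> In y L.

Lemma supported_in_adj {V} (G : wgraph V) L g x y : supported_in G L g -> adj G x y ->
  (g x <> 0 \/ g y <> 0) -> In x L.
Proof. intros Hg A [Hx|Hy]; [apply Hg, Hx|apply (Hg y Hy), adj_sym, A]. Qed.

Lemma supported_in_sub {V} (G : wgraph V) L g h : supported_in G L g ->
  (forall x, h x <> 0 -> g x <> 0) -> supported_in G L h.
Proof. intros Hg Hh x Hx. apply Hg, Hh, Hx. Qed.

Lemma green_formula {V} (G : wgraph V) (g v : V -> R) L : NoDup L -> supported_in G L g ->
  lsum (fun x => vm G x * g x * laplacian G v x) L =
  - / 2 * esum G L (fun x y => (g y - g x) * (v y - v x)).
Proof.
  intros ND Hg.
  assert (E1 : lsum (fun x => vm G x * g x * laplacian G v x) L = esum G L (fun x y => g x * (v y - v x))).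
  { unfold esum. apply lsum_ext. intros x _.
    replace (vm G x * g x * laplacian G v x) with (g x * (vm G x * laplacian G v x)) by ring.
    rewrite laplacian_mul_vm, <- lsum_scal. apply lsum_ext. intros; ring. }
  assert (E2 : esum G L (fun x y => g x * (v y - v x)) = esum G L (fun x y => g y * (v x - v y))).
  { apply esum_swap; auto. intros x y A Hk. apply (supported_in_adj G L g x y Hg A).
    destruct Hk as [Hk|Hk]; [left|right]; intros E; apply Hk; rewrite E; ring. }
  assert (E3 : esum G L (fun x y => (g y - g x) * (v y - v x))
               = -1 * (esum G L (fun x y => g x * (v y - v x)) + esum G L (fun x y => g y * (v x - v y)))).
  { rewrite <- esum_plus, <- esum_scal. apply esum_ext. intros; ring. }
  rewrite E1, E3, <- E2. lra.
Qed.

(** * Cutoff functions and energy inequalities *)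

Definition clamp z := Rmin 1 (Rmax 0 z).

Lemma clamp_bounds z : 0 <= clamp z <= 1.
Proof. unfold clamp, Rmin, Rmax. repeat destruct Rle_dec; lra. Qed.

Lemma clamp_lip z z' : Rabs (clamp z - clamp z') <= Rabs (z - z').
Proof. unfold clamp, Rmin, Rmax. repeat destruct Rle_dec; unfold Rabs; repeat destruct Rcase_abs; lra. Qed.

Lemma clamp_1 z : 1 <= z -> clamp z = 1.
Proof. unfold clamp, Rmin, Rmax. repeat destruct Rle_dec; lra. Qed.

Lemma clamp_0 z : z <= 0 -> clamp z = 0.
Proof. unfold clamp, Rmin, Rmax. repeat destruct Rle_dec; lra. Qed.

Definition lipschitz_with {V} (rho : V -> V -> R) (r : R) (phi : V -> R) : Prop :=
  forall x y, Rabs (phi x - phi y) <= rho x y / r.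

Definition cutoff {V} (rho : V -> V -> R) (x0 : V) (r : R) (x : V) : R :=
  clamp ((2 * r - rho x x0) / r).

Lemma cutoff_bounds {V} rho (x0 : V) r x : 0 <= cutoff rho x0 r x <= 1.
Proof. apply clamp_bounds. Qed.

Lemma cutoff_one {V} rho (x0 : V) r x : 0 < r -> rho x x0 <= r -> cutoff rho x0 r x = 1.
Proof.
  intros. unfold cutoff. apply clamp_1. apply Rmult_le_reg_r with r; auto.
  unfold Rdiv. rewrite Rmult_assoc, Rinv_l by lra. lra.
Qed.

Lemma cutoff_neq0 {V} rho (x0 : V) r x : 0 < r -> cutoff rho x0 r x <> 0 -> rho x x0 < 2 * r.
Proof.
  intros Hr H. destruct (Rlt_le_dec (rho x x0) (2 * r)) as [|Hx]; auto.
  exfalso; apply H. unfold cutoff. apply clamp_0. unfold Rdiv.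
  assert (0 < / r) by (apply Rinv_0_lt_compat; auto). nra.
Qed.

Lemma cutoff_lipschitz {V} (G : wgraph V) rho (x0 : V) r : intrinsic_metric G rho -> 0 < r ->
  lipschitz_with rho r (cutoff rho x0 r).
Proof.
  intros [_ [_ [Hsym [Htri _]]]] Hr x y. unfold cutoff.
  eapply Rle_trans; [apply clamp_lip|].
  replace ((2 * r - rho x x0) / r - (2 * r - rho y x0) / r) with ((rho y x0 - rho x x0) / r) by (field; lra).
  unfold Rdiv. rewrite Rabs_mult, (Rabs_right (/ r)) by (left; apply Rinv_0_lt_compat; auto).
  apply Rmult_le_compat_r; [left; apply Rinv_0_lt_compat; auto|].
  pose proof (Htri y x x0). pose proof (Htri x y x0). rewrite (Hsym y x) in *.
  unfold Rabs; destruct Rcase_abs; lra.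
Qed.

Lemma intrinsic_gradient_bound {V} (G : wgraph V) rho (phi : V -> R) r x :
  intrinsic_metric G rho -> 0 < r -> lipschitz_with rho r phi ->
  lsum (fun y => ew G x y * (phi y - phi x) ^ 2) (nbrs G x) <= vm G x / r ^ 2.
Proof.
  intros [_ [_ [_ [_ Hint]]]] Hr Hl.
  apply Rle_trans with (lsum (fun y => / r ^ 2 * (ew G x y * rho x y ^ 2)) (nbrs G x)).
  - apply lsum_le. intros y _. pose proof (ew_nonneg G x y).
    assert ((phi y - phi x) ^ 2 <= / r ^ 2 * rho x y ^ 2); [|nra].
    replace (/ r ^ 2 * rho x y ^ 2) with ((rho x y / r) ^ 2) by (field; lra).
    rewrite <- (Rsqr_pow2 (phi y - phi x)), <- Rsqr_pow2, Rsqr_neg_minus.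
    apply Rsqr_le_abs_1. rewrite (Rabs_pos_eq (rho x y / r)); [apply Hl|].
    eapply Rle_trans; [apply Rabs_pos|apply Hl].
  - rewrite lsum_scal. unfold Rdiv. rewrite Rmult_comm.
    apply Rmult_le_compat_r; [left; apply Rinv_0_lt_compat, pow_lt; auto|apply Hint].
Qed.

Lemma esum_gradient_bound {V} (G : wgraph V) rho (phi h : V -> R) r L :
  intrinsic_metric G rho -> 0 < r -> lipschitz_with rho r phi -> (forall x, 0 <= h x) ->
  esum G L (fun x y => (phi y - phi x) ^ 2 * h x) <= / r ^ 2 * lsum (fun x => vm G x * h x) L.
Proof.
  intros HI Hr Hl Hh. unfold esum. rewrite <- lsum_scal. apply lsum_le. intros x _.
  rewrite (lsum_ext _ (fun y => h x * (ew G x y * (phi y - phi x) ^ 2))) by (intros; ring).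
  rewrite lsum_scal. pose proof (intrinsic_gradient_bound G rho phi r x HI Hr Hl) as Hg.
  pose proof (Hh x). unfold Rdiv in Hg. nra.
Qed.

Lemma esum_gradient_bound_sym {V} (G : wgraph V) rho (phi h : V -> R) r L :
  intrinsic_metric G rho -> 0 < r -> NoDup L -> lipschitz_with rho r phi -> supported_in G L phi ->
  (forall x, 0 <= h x) ->
  esum G L (fun x y => (phi y - phi x) ^ 2 * (h x + h y)) <= 2 / r ^ 2 * lsum (fun x => vm G x * h x) L.
Proof.
  intros HI Hr ND Hl Hs Hh.
  rewrite (esum_ext G L _ (fun x y => (phi y - phi x) ^ 2 * h x + (phi y - phi x) ^ 2 * h y)) by (intros; ring).
  rewrite esum_plus.
  rewrite (esum_swap G (fun x y => (phi y - phi x) ^ 2 * h y)); auto.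
  - cbv beta. rewrite (esum_ext G L (fun x y => (phi x - phi y) ^ 2 * h x) (fun x y => (phi y - phi x) ^ 2 * h x))
      by (intros; ring).
    pose proof (esum_gradient_bound G rho phi h r L HI Hr Hl Hh).
    replace (2 / r ^ 2) with (2 * / r ^ 2) by (unfold Rdiv; ring). lra.
  - intros x y A Hk. apply (supported_in_adj G L phi x y Hs A).
    destruct (Req_dec (phi x) 0) as [Ex|Ex]; [|left; auto].
    right. intros Ey. destruct Hk as [Hk|Hk]; apply Hk; rewrite Ex, Ey; ring.
Qed.

Lemma cutoff_mass_ineq a b p q : 0 <= a -> 0 <= b ->
  - ((b ^ 2 * q - a ^ 2 * p) * (q - p)) <= - (1 / 2) * (a * b * (q - p) ^ 2) + 3 * ((b - a) ^ 2 * (p ^ 2 + q ^ 2)).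
Proof.
  intros.
  pose proof (pow2_ge_0 ((b - a) * (p + q) + (a + b) * (q - p) / 2)).
  pose proof (pow2_ge_0 ((b - a) * (p - q))).
  pose proof (pow2_ge_0 ((b - a) * (p + q))).
  pose proof (pow2_ge_0 ((b - a) * p)).
  pose proof (pow2_ge_0 ((b - a) * q)).
  nra.
Qed.

(* The left side is the time derivative of the localized mass [sum m Phi^2 v^2] along the heat flow. *)
Lemma cutoff_mass_dissipation {V} (G : wgraph V) rho (Phi v : V -> R) L r :
  intrinsic_metric G rho -> 0 < r -> NoDup L -> (forall x, 0 <= Phi x) ->
  lipschitz_with rho r Phi -> supported_in G L Phi ->
  2 * lsum (fun x => vm G x * (Phi x ^ 2 * v x) * laplacian G v x) L <=
  - / 2 * esum G L (fun x y => Phi x * Phi y * (v y - v x) ^ 2) + 6 / r ^ 2 * lsum (fun x => vm G x * v x ^ 2) L.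
Proof.
  intros HI Hr ND Hp Hl Hs.
  rewrite green_formula; auto.
  2:{ apply (supported_in_sub G L Phi); auto. intros x Hx E; apply Hx; rewrite E; ring. }
  apply Rle_trans with (esum G L (fun x y => - (1 / 2) * (Phi x * Phi y * (v y - v x) ^ 2)
                                             + 3 * ((Phi y - Phi x) ^ 2 * (v x ^ 2 + v y ^ 2)))).
  - replace (2 * (- / 2 * esum G L (fun x y => (Phi y ^ 2 * v y - Phi x ^ 2 * v x) * (v y - v x))))
      with (-1 * esum G L (fun x y => (Phi y ^ 2 * v y - Phi x ^ 2 * v x) * (v y - v x))) by lra.
    rewrite <- esum_scal. apply esum_le. intros x y _.
    pose proof (cutoff_mass_ineq (Phi x) (Phi y) (v x) (v y) (Hp x) (Hp y)). nra.
  - rewrite esum_plus, !esum_scal.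
    pose proof (esum_gradient_bound_sym G rho Phi (fun x => v x ^ 2) r L HI Hr ND Hl Hs (fun x => pow2_ge_0 (v x))).
    replace (6 / r ^ 2) with (3 * (2 / r ^ 2)) by (field; lra). lra.
Qed.

Lemma young_ineq r A B : 0 < r -> A * B <= r ^ 2 / 8 * A ^ 2 + 2 / r ^ 2 * B ^ 2.
Proof.
  intros Hr. pose proof (pow2_ge_0 (r ^ 2 * A / 2 - 2 * B)).
  assert (0 < r ^ 2) by (apply pow_lt; auto).
  apply Rmult_le_reg_l with (r ^ 2); auto.
  replace (r ^ 2 * (r ^ 2 / 8 * A ^ 2 + 2 / r ^ 2 * B ^ 2)) with (r ^ 4 / 8 * A ^ 2 + 2 * B ^ 2) by (field; lra).
  nra.
Qed.

Lemma young_ineq_cutoff r d X Y P : 0 < r -> (d <> 0 -> P = 1) -> 0 <= P ->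
  Rabs (d * X * Y) <= r ^ 2 / 8 * (d ^ 2 * X ^ 2) + 2 / r ^ 2 * (P * Y ^ 2).
Proof.
  intros Hr HP HP0. assert (0 < r ^ 2) by (apply pow_lt; auto).
  assert (0 <= 2 / r ^ 2) by (unfold Rdiv; apply Rmult_le_pos; [lra|left; apply Rinv_0_lt_compat; auto]).
  destruct (Req_dec d 0) as [->|E].
  - rewrite !Rmult_0_l, Rabs_R0. pose proof (pow2_ge_0 Y).
    assert (0 <= 2 / r ^ 2 * (P * Y ^ 2)) by (apply Rmult_le_pos; auto; apply Rmult_le_pos; auto).
    replace (r ^ 2 / 8 * (0 ^ 2 * X ^ 2)) with 0 by ring. lra.
  - rewrite HP, Rmult_1_l, Rabs_mult by auto.
    pose proof (young_ineq r (Rabs (d * X)) (Rabs Y) Hr) as Hy.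
    rewrite <- !Rsqr_pow2, <- !Rsqr_abs in Hy. rewrite <- !Rsqr_pow2, Rsqr_mult in *. lra.
Qed.

Lemma esum_cross_term_bound {V} (G : wgraph V) (phi Phi v w : V -> R) L r : 0 < r ->
  (forall x y, adj G x y -> phi x <> phi y -> Phi x = 1 /\ Phi y = 1) -> (forall x, 0 <= Phi x) ->
  - esum G L (fun x y => (phi y - phi x) * (phi y * w y + phi x * w x) * (v y - v x)) <=
  r ^ 2 / 8 * esum G L (fun x y => (phi y - phi x) ^ 2 * (phi y * w y + phi x * w x) ^ 2)
  + 2 / r ^ 2 * esum G L (fun x y => Phi x * Phi y * (v y - v x) ^ 2).
Proof.
  intros Hr HPhi HP0.
  rewrite <- !esum_scal, <- esum_plus.
  replace (- esum G L (fun x y => (phi y - phi x) * (phi y * w y + phi x * w x) * (v y - v x)))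
    with (-1 * esum G L (fun x y => (phi y - phi x) * (phi y * w y + phi x * w x) * (v y - v x))) by ring.
  rewrite <- esum_scal. apply esum_le. intros x y A.
  assert (Hd : phi y - phi x <> 0 -> Phi x * Phi y = 1).
  { intros Hd. destruct (HPhi x y A) as [-> ->]; [intros E; apply Hd; rewrite E; ring|ring]. }
  pose proof (young_ineq_cutoff r (phi y - phi x) (phi y * w y + phi x * w x) (v y - v x) (Phi x * Phi y)
                Hr Hd (Rmult_le_pos _ _ (HP0 x) (HP0 y))).
  pose proof (Rabs_maj2 ((phi y - phi x) * (phi y * w y + phi x * w x) * (v y - v x))). lra.
Qed.

(* The [esum] weighted by [phi x * phi y] is the time derivative of the [phi]-localized energy along
   the heat flow; [Phi] is a wider cutoff. *)
Lemma cutoff_energy_dissipation {V} (G : wgraph V) rho (phi Phi v : V -> R) L r :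
  intrinsic_metric G rho -> 0 < r -> NoDup L -> (forall x, 0 <= phi x) ->
  lipschitz_with rho r phi -> supported_in G L phi ->
  (forall x y, adj G x y -> phi x <> phi y -> Phi x = 1 /\ Phi y = 1) -> (forall x, 0 <= Phi x) ->
  lsum (fun x => vm G x * phi x ^ 2 * laplacian G v x ^ 2) L <=
  - / 3 * esum G L (fun x y => phi x * phi y * (2 * ((v y - v x) * (laplacian G v y - laplacian G v x))))
  + 2 / r ^ 2 * esum G L (fun x y => Phi x * Phi y * (v y - v x) ^ 2).
Proof.
  intros HI Hr ND Hp Hl Hs HPhi HP0.
  set (w := laplacian G v).
  set (Sw := lsum (fun x => vm G x * phi x ^ 2 * w x ^ 2) L).
  set (Dd := esum G L (fun x y => phi x * phi y * (2 * ((v y - v x) * (w y - w x))))).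
  set (DP := esum G L (fun x y => Phi x * Phi y * (v y - v x) ^ 2)).
  set (X := esum G L (fun x y => (phi y - phi x) * (phi y * w y + phi x * w x) * (v y - v x))).
  set (Y := esum G L (fun x y => (phi y - phi x) ^ 2 * (phi y * w y + phi x * w x) ^ 2)).
  (* [phi_y^2 w_y - phi_x^2 w_x = phi_x phi_y (w_y - w_x) + (phi_y - phi_x)(phi_y w_y + phi_x w_x)] *)
  assert (Hgreen : Sw = - / 4 * Dd - / 2 * X).
  { transitivity (lsum (fun x => vm G x * (phi x ^ 2 * w x) * laplacian G v x) L).
    { apply lsum_ext. intros. unfold w. ring. }
    rewrite green_formula; auto.
    2:{ apply (supported_in_sub G L phi); auto. intros x Hx E; apply Hx; rewrite E; ring. }
    replace (- / 4 * Dd - / 2 * X) with (- / 2 * (/ 2 * Dd + X)) by field. f_equal.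
    unfold Dd, X. rewrite <- esum_scal, <- esum_plus. apply esum_ext. intros. field. }
  assert (HY : Y <= 4 / r ^ 2 * Sw).
  { apply Rle_trans with (esum G L (fun x y => (phi y - phi x) ^ 2 *
                           (2 * (phi x ^ 2 * w x ^ 2) + 2 * (phi y ^ 2 * w y ^ 2)))).
    - apply esum_le. intros x y _. pose proof (pow2_ge_0 (phi y - phi x)).
      pose proof (pow2_ge_0 (phi y * w y - phi x * w x)). nra.
    - rewrite (esum_ext G L _ (fun x y => 2 * ((phi y - phi x) ^ 2 * (phi x ^ 2 * w x ^ 2 + phi y ^ 2 * w y ^ 2))))
        by (intros; ring).
      rewrite esum_scal.
      pose proof (esum_gradient_bound_sym G rho phi (fun x => phi x ^ 2 * w x ^ 2) r L HI Hr ND Hl Hs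
                    (fun x => Rmult_le_pos _ _ (pow2_ge_0 _) (pow2_ge_0 _))).
      unfold Sw. rewrite (lsum_ext _ (fun x => vm G x * (phi x ^ 2 * w x ^ 2))) by (intros; ring).
      replace (4 / r ^ 2) with (2 * (2 / r ^ 2)) by (field; lra). lra. }
  assert (HX : - X <= r ^ 2 / 8 * Y + 2 / r ^ 2 * DP) by (apply esum_cross_term_bound; auto).
  assert (0 < r ^ 2) by (apply pow_lt; auto).
  assert (r ^ 2 / 8 * Y <= / 2 * Sw).
  { replace (/ 2 * Sw) with (r ^ 2 / 8 * (4 / r ^ 2 * Sw)) by (field; lra).
    apply Rmult_le_compat_l; [unfold Rdiv; apply Rmult_le_pos; lra|auto]. }
  assert (0 <= 2 / r ^ 2 * DP).
  { apply Rmult_le_pos; [unfold Rdiv; apply Rmult_le_pos; [lra|left; apply Rinv_0_lt_compat; auto]|].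
    apply esum_nonneg. intros. apply Rmult_le_pos; [apply Rmult_le_pos; auto|apply pow2_ge_0]. }
  fold w Sw Dd DP. lra.
Qed.

Lemma is_derive_Rplus (f g : R -> R) x df dg : is_derive f x df -> is_derive g x dg ->
  is_derive (fun t => f t + g t) x (df + dg).
Proof. apply (is_derive_plus f g x df dg). Qed.

Lemma is_derive_Rminus (f g : R -> R) x df dg : is_derive f x df -> is_derive g x dg ->
  is_derive (fun t => f t - g t) x (df - dg).
Proof. apply (is_derive_minus f g x df dg). Qed.

Lemma is_derive_Rmult (f g : R -> R) x df dg : is_derive f x df -> is_derive g x dg ->
  is_derive (fun t => f t * g t) x (df * g x + f x * dg).
Proof. intros. apply (is_derive_mult f g x df dg); auto. intros; apply Rmult_comm. Qed.

Lemma is_derive_Rconst (c x : R) : is_derive (fun _ => c) x 0.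
Proof. apply (is_derive_const c x). Qed.

Lemma is_derive_Rscal (c : R) (f : R -> R) x df : is_derive f x df -> is_derive (fun t => c * f t) x (c * df).
Proof. apply is_derive_scal. Qed.

Lemma is_derive_sq (f : R -> R) t l : is_derive f t l -> is_derive (fun t => f t ^ 2) t (2 * f t * l).
Proof.
  intros H. apply (is_derive_ext (fun t => f t * f t)); [intros; simpl; ring|].
  replace (2 * f t * l) with (l * f t + f t * l) by ring. apply is_derive_Rmult; auto.
Qed.

Lemma continuous_Rplus (f g : R -> R) x : continuous f x -> continuous g x -> continuous (fun t => f t + g t) x.
Proof. apply (continuous_plus f g x). Qed.

Lemma continuous_Rminus (f g : R -> R) x : continuous f x -> continuous g x -> continuous (fun t => f t - g t) x.
Proof. apply (continuous_minus f g x). Qed.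

Lemma continuous_Rmult (f g : R -> R) x : continuous f x -> continuous g x -> continuous (fun t => f t * g t) x.
Proof. apply (continuous_mult f g x). Qed.

Lemma continuous_Rconst (c x : R) : continuous (fun _ => c) x.
Proof. apply continuous_const. Qed.

Lemma continuous_sq (f : R -> R) t : continuous f t -> continuous (fun t => f t ^ 2) t.
Proof.
  intros H. apply (continuous_ext (fun t => f t * f t)); [intros; simpl; ring|].
  apply continuous_Rmult; auto.
Qed.

Lemma is_derive_continuous_R (f : R -> R) t l : is_derive f t l -> continuous f t.
Proof. intros H. apply (ex_derive_continuous (K := R_AbsRing) (V := R_NormedModule)). exists l; auto. Qed.

Lemma is_derive_lsum {A} (F F' : A -> R -> R) l t : (forall y, In y l -> is_derive (F y) t (F' y t)) ->
  is_derive (fun t => lsum (fun y => F y t) l) t (lsum (fun y => F' y t) l).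
Proof.
  induction l; intros H; simpl; [apply is_derive_Rconst|].
  apply is_derive_Rplus; [apply H; simpl; auto|apply IHl; intros; apply H; simpl; auto].
Qed.

Lemma continuous_lsum {A} (F : A -> R -> R) l t : (forall y, In y l -> continuous (F y) t) ->
  continuous (fun t => lsum (fun y => F y t) l) t.
Proof.
  induction l; intros H; simpl; [apply continuous_Rconst|].
  apply continuous_Rplus; [apply H; simpl; auto|apply IHl; intros; apply H; simpl; auto].
Qed.

Lemma is_derive_nsum (F F' : nat -> R -> R) n t : (forall i, (i < n)%nat -> is_derive (F i) t (F' i t)) ->
  is_derive (fun t => nsum n (fun i => F i t)) t (nsum n (fun i => F' i t)).
Proof.
  induction n; intros H; simpl; [apply is_derive_Rconst|].
  apply is_derive_Rplus; [apply IHn; intros; apply H; lia|apply H; lia].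
Qed.

Lemma continuous_laplacian {V} (G : wgraph V) (v : V -> R -> R) x t : (forall y, continuous (v y) t) ->
  continuous (fun t => laplacian G (fun y => v y t) x) t.
Proof.
  intros H. apply (continuous_lsum (fun y t => ew G x y / vm G x * (v y t - v x t))).
  intros. apply continuous_Rmult; [apply continuous_Rconst|apply continuous_Rminus; auto].
Qed.

Lemma continuous_esum {V} (G : wgraph V) L (F : V -> V -> R -> R) t : (forall x y, continuous (F x y) t) ->
  continuous (fun t => esum G L (fun x y => F x y t)) t.
Proof.
  intros H. apply (continuous_lsum (fun x t => lsum (fun y => ew G x y * F x y t) (nbrs G x))).
  intros x _. apply (continuous_lsum (fun y t => ew G x y * F x y t)).
  intros. apply continuous_Rmult; [apply continuous_Rconst|auto].
Qed.

Lemma is_derive_esum {V} (G : wgraph V) L (F F' : V -> V -> R -> R) t :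
  (forall x y, is_derive (F x y) t (F' x y t)) ->
  is_derive (fun t => esum G L (fun x y => F x y t)) t (esum G L (fun x y => F' x y t)).
Proof.
  intros H. apply (is_derive_lsum (fun x t => lsum (fun y => ew G x y * F x y t) (nbrs G x))
                                  (fun x t => lsum (fun y => ew G x y * F' x y t) (nbrs G x))).
  intros x _. apply (is_derive_lsum (fun y t => ew G x y * F x y t) (fun y t => ew G x y * F' x y t)).
  intros. apply is_derive_Rscal; auto.
Qed.

Lemma ex_RInt_cont (g : R -> R) a b : a <= b -> (forall t, a <= t <= b -> continuous g t) -> ex_RInt g a b.
Proof.
  intros Hab Hc. apply (ex_RInt_continuous (V := R_CompleteNormedModule)). intros z Hz. apply Hc.
  rewrite Rmin_left, Rmax_right in Hz; lra.
Qed.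

Lemma RInt_le_cont (f g : R -> R) a b : a <= b ->
  (forall t, a <= t <= b -> continuous f t) -> (forall t, a <= t <= b -> continuous g t) ->
  (forall t, a <= t <= b -> f t <= g t) -> RInt f a b <= RInt g a b.
Proof. intros Hab Hf Hg Hfg. apply RInt_le; [auto|apply ex_RInt_cont; auto..|]. intros; apply Hfg; lra. Qed.

Lemma RInt_ge_0_cont (g : R -> R) a b : a <= b -> (forall t, a <= t <= b -> continuous g t) ->
  (forall t, a <= t <= b -> 0 <= g t) -> 0 <= RInt g a b.
Proof. intros Hab Hc Hg. apply RInt_ge_0; [auto|apply ex_RInt_cont; auto|]. intros; apply Hg; lra. Qed.

Lemma RInt_le_const (g : R -> R) a b B : a <= b -> (forall t, a <= t <= b -> continuous g t) ->
  (forall t, a <= t <= b -> g t <= B) -> RInt g a b <= B * (b - a).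
Proof.
  intros Hab Hc HB. replace (B * (b - a)) with (RInt (fun _ => B) a b).
  - apply RInt_le_cont; auto. intros; apply continuous_Rconst.
  - rewrite RInt_const. simpl. unfold scal; simpl. unfold mult; simpl. ring.
Qed.

Lemma RInt_ge_min_point (g : R -> R) a b : a < b -> (forall t, a <= t <= b -> continuous g t) ->
  exists t, a <= t <= b /\ g t * (b - a) <= RInt g a b.
Proof.
  intros Hab Hc.
  destruct (continuity_ab_min g a b (Rlt_le _ _ Hab)) as [m [Hm Hmab]].
  { intros c Hc'. apply continuity_pt_filterlim. apply Hc; auto. }
  exists m. split; auto. rewrite <- (Rmult_comm (b - a)).
  replace ((b - a) * g m) with (RInt (fun _ => g m) a b) by (rewrite RInt_const; reflexivity).
  apply RInt_le_cont; [lra|intros; apply continuous_Rconst|auto|intros; apply Hm; lra].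
Qed.

Lemma RInt_le_shrink_l (g : R -> R) a a' b : a <= a' -> a' <= b ->
  (forall t, a <= t <= b -> continuous g t) -> (forall t, a <= t <= b -> 0 <= g t) ->
  RInt g a' b <= RInt g a b.
Proof.
  intros Ha Hb Hc Hg. rewrite <- (RInt_Chasles g a a' b); try (apply ex_RInt_cont; auto; intros; apply Hc; lra).
  assert (0 <= RInt g a a') by (apply RInt_ge_0_cont; auto; intros; [apply Hc|apply Hg]; lra).
  simpl. unfold plus; simpl. lra.
Qed.

Lemma RInt_le_shrink_r (g : R -> R) a b b' : a <= b' -> b' <= b ->
  (forall t, a <= t <= b -> continuous g t) -> (forall t, a <= t <= b -> 0 <= g t) ->
  RInt g a b' <= RInt g a b.
Proof.
  intros Ha Hb Hc Hg. rewrite <- (RInt_Chasles g a b' b); try (apply ex_RInt_cont; auto; intros; apply Hc; lra).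
  assert (0 <= RInt g b' b) by (apply RInt_ge_0_cont; auto; intros; [apply Hc|apply Hg]; lra).
  simpl. unfold plus; simpl. lra.
Qed.

Lemma RInt_lin_cont (f g : R -> R) a b c d : a <= b ->
  (forall t, a <= t <= b -> continuous f t) -> (forall t, a <= t <= b -> continuous g t) ->
  RInt (fun t => c * f t + d * g t) a b = c * RInt f a b + d * RInt g a b.
Proof.
  intros Hab Hf Hg. rewrite (RInt_plus (fun t => c * f t) (fun t => d * g t)), (RInt_scal f), (RInt_scal g).
  - reflexivity.
  - apply ex_RInt_cont; auto.
  - apply ex_RInt_cont; auto.
  - apply (ex_RInt_scal f), ex_RInt_cont; auto.
  - apply (ex_RInt_scal g), ex_RInt_cont; auto.
Qed.

Lemma RInt_derive_cont (f df : R -> R) a b : a <= b ->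
  (forall t, a <= t <= b -> is_derive f t (df t)) -> (forall t, a <= t <= b -> continuous df t) ->
  RInt df a b = f b - f a.
Proof.
  intros Hab Hd Hc. apply is_RInt_unique, (is_RInt_derive f df a b);
    intros t Ht; rewrite Rmin_left, Rmax_right in Ht by lra; [apply Hd|apply Hc]; lra.
Qed.

Lemma RInt_le_0_zero (g : R -> R) a b t : a < b ->
  (forall t, a <= t <= b -> continuous g t) -> (forall t, a <= t <= b -> 0 <= g t) ->
  RInt g a b <= 0 -> a < t < b -> g t = 0.
Proof.
  intros Hab Hc Hp Hi Ht.
  destruct (Rle_lt_or_eq_dec 0 (g t)) as [Hlt|]; [apply Hp; lra| |auto]. exfalso.
  assert (Hcont := Hc t (conj (Rlt_le _ _ (proj1 Ht)) (Rlt_le _ _ (proj2 Ht)))).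
  apply continuity_pt_filterlim in Hcont.
  destruct (Hcont (g t / 2)) as [d [Hd Hd']]; [lra|].
  assert (Hs : forall s, Rabs (s - t) < d -> g t / 2 < g s).
  { intros s Hs. destruct (Req_dec s t) as [->|Hne]; [lra|].
    assert (Hst : D_x no_cond t s /\ R_dist s t < d) by (repeat split; auto).
    specialize (Hd' s Hst). simpl in Hd'. unfold R_dist in Hd'. apply Rabs_def2 in Hd'. lra. }
  set (c := Rmax a (t - d / 2)). set (e := Rmin b (t + d / 2)).
  assert (a <= c /\ c < t /\ t < e /\ e <= b) by (unfold c, e, Rmax, Rmin; repeat destruct Rle_dec; lra).
  assert (0 < RInt g c e).
  { apply RInt_gt_0; [lra| |intros; apply Hc; lra].
    intros x Hx. assert (Hxt : Rabs (x - t) < d); [|specialize (Hs x Hxt); lra].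
    unfold c, e, Rmax, Rmin in *; repeat destruct Rle_dec; apply Rabs_def1; lra. }
  assert (RInt g c e <= RInt g a b); [|lra].
  eapply Rle_trans; [apply (RInt_le_shrink_r g c b e)|apply RInt_le_shrink_l];
    try lra; intros; try apply Hc; try apply Hp; lra.
Qed.

(** * Caccioppoli estimates for the heat equation *)

Definition heat_on {V} (G : wgraph V) (v : V -> R -> R) (a b : R) : Prop :=
  forall x t, a <= t <= b -> is_derive (v x) t (laplacian G (fun y => v y t) x).

Definition mass {V} (G : wgraph V) (L : list V) (v : V -> R -> R) (t : R) : R :=
  lsum (fun x => vm G x * v x t ^ 2) L.

Definition energy {V} (G : wgraph V) (L : list V) (Phi : V -> R) (v : V -> R -> R) (t : R) : R :=
  esum G L (fun x y => Phi x * Phi y * (v y t - v x t) ^ 2).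

Lemma heat_on_continuous {V} (G : wgraph V) v a b x t : heat_on G v a b -> a <= t <= b -> continuous (v x) t.
Proof. intros H Ht. eapply is_derive_continuous_R, H, Ht. Qed.

Lemma mass_continuous {V} (G : wgraph V) L v t : (forall x, continuous (v x) t) -> continuous (mass G L v) t.
Proof.
  intros H. apply (continuous_lsum (fun x t => vm G x * v x t ^ 2)). intros.
  apply continuous_Rmult; [apply continuous_Rconst|apply continuous_sq; auto].
Qed.

Lemma energy_continuous {V} (G : wgraph V) L Phi v t : (forall x, continuous (v x) t) ->
  continuous (energy G L Phi v) t.
Proof.
  intros H. apply (continuous_esum G L (fun x y t => Phi x * Phi y * (v y t - v x t) ^ 2)). intros.
  apply continuous_Rmult; [apply continuous_Rconst|apply continuous_sq, continuous_Rminus; auto].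
Qed.

Lemma mass_nonneg {V} (G : wgraph V) L v t : 0 <= mass G L v t.
Proof. apply lsum_nonneg. intros. apply Rmult_le_pos; [left; apply vm_pos|apply pow2_ge_0]. Qed.

Lemma energy_nonneg {V} (G : wgraph V) L Phi v t : (forall x, 0 <= Phi x) -> 0 <= energy G L Phi v t.
Proof.
  intros H. apply esum_nonneg. intros.
  apply Rmult_le_pos; [apply Rmult_le_pos; auto|apply pow2_ge_0].
Qed.

Lemma energy_integral_bound {V} (G : wgraph V) rho (Phi : V -> R) (v : V -> R -> R) L r a b :
  intrinsic_metric G rho -> 0 < r -> NoDup L -> (forall x, 0 <= Phi x <= 1) ->
  lipschitz_with rho r Phi -> supported_in G L Phi -> a <= b -> heat_on G v a b ->
  RInt (energy G L Phi v) a b <= 2 * mass G L v a + 12 / r ^ 2 * RInt (mass G L v) a b.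
Proof.
  intros HI Hr ND Hp Hl Hs Hab Hd.
  assert (Hc : forall x t, a <= t <= b -> continuous (v x) t) by (intros; eapply heat_on_continuous; eauto).
  set (E := fun t => lsum (fun x => vm G x * (Phi x ^ 2 * v x t ^ 2)) L).
  set (E' := fun t => lsum (fun x => vm G x * (Phi x ^ 2 * (2 * v x t * laplacian G (fun y => v y t) x))) L).
  assert (HE : forall t, a <= t <= b -> is_derive E t (E' t)).
  { intros t Ht. apply (is_derive_lsum (fun x t => vm G x * (Phi x ^ 2 * v x t ^ 2))
       (fun x t => vm G x * (Phi x ^ 2 * (2 * v x t * laplacian G (fun y => v y t) x)))).
    intros. apply is_derive_Rscal, is_derive_Rscal, is_derive_sq, Hd; auto. }
  assert (HE'c : forall t, a <= t <= b -> continuous E' t).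
  { intros t Ht.
    apply (continuous_lsum (fun x t => vm G x * (Phi x ^ 2 * (2 * v x t * laplacian G (fun y => v y t) x)))).
    intros. repeat apply continuous_Rmult; try apply continuous_Rconst; auto.
    apply continuous_laplacian. intros; apply Hc; auto. }
  assert (Hbound : forall t, a <= t <= b -> E' t <= - / 2 * energy G L Phi v t + 6 / r ^ 2 * mass G L v t).
  { intros t Ht.
    replace (E' t) with (2 * lsum (fun x => vm G x * (Phi x ^ 2 * v x t) * laplacian G (fun y => v y t) x) L).
    { apply (cutoff_mass_dissipation G rho Phi (fun y => v y t) L r HI Hr ND (fun x => proj1 (Hp x)) Hl Hs). }
    unfold E'. rewrite <- lsum_scal. apply lsum_ext. intros; ring. }
  assert (Hint : RInt E' a b <= - / 2 * RInt (energy G L Phi v) a b + 6 / r ^ 2 * RInt (mass G L v) a b).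
  { rewrite <- RInt_lin_cont; auto;
      try (intros; apply energy_continuous || apply mass_continuous; intros; apply Hc; auto).
    apply RInt_le_cont; auto.
    intros. apply continuous_Rplus; apply continuous_Rmult; try apply continuous_Rconst;
      [apply energy_continuous|apply mass_continuous]; intros; apply Hc; auto. }
  rewrite (RInt_derive_cont E E' a b Hab HE HE'c) in Hint.
  assert (0 <= E b).
  { apply lsum_nonneg. intros. apply Rmult_le_pos; [left; apply vm_pos|].
    apply Rmult_le_pos; apply pow2_ge_0. }
  assert (E a <= mass G L v a).
  { apply lsum_le. intros. apply Rmult_le_compat_l; [left; apply vm_pos|].
    destruct (Hp x). assert (Phi x ^ 2 <= 1) by nra. pose proof (pow2_ge_0 (v x a)). nra. }
  lra.
Qed.

Lemma laplacian_mass_integral_bound {V} (G : wgraph V) rho (phi Phi : V -> R) (v : V -> R -> R) L r a b :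
  intrinsic_metric G rho -> 0 < r -> NoDup L -> (forall x, 0 <= phi x) ->
  lipschitz_with rho r phi -> supported_in G L phi ->
  (forall x y, adj G x y -> phi x <> phi y -> Phi x = 1 /\ Phi y = 1) -> (forall x, 0 <= Phi x) ->
  a <= b -> heat_on G v a b ->
  RInt (mass G L (fun x t => phi x * laplacian G (fun y => v y t) x)) a b <=
  / 3 * energy G L phi v a + 2 / r ^ 2 * RInt (energy G L Phi v) a b.
Proof.
  intros HI Hr ND Hp Hl Hs HP HP0 Hab Hd.
  assert (Hc : forall x t, a <= t <= b -> continuous (v x) t) by (intros; eapply heat_on_continuous; eauto).
  set (w := fun x t => laplacian G (fun y => v y t) x).
  assert (Hwc : forall x t, a <= t <= b -> continuous (w x) t)
    by (intros; apply continuous_laplacian; intros; apply Hc; auto).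
  set (Dd := fun t => esum G L (fun x y => phi x * phi y * (2 * ((v y t - v x t) * (w y t - w x t))))).
  assert (HD : forall t, a <= t <= b -> is_derive (energy G L phi v) t (Dd t)).
  { intros t Ht. apply (is_derive_esum G L (fun x y t => phi x * phi y * (v y t - v x t) ^ 2)
      (fun x y t => phi x * phi y * (2 * ((v y t - v x t) * (w y t - w x t))))).
    intros. apply is_derive_Rscal.
    replace (2 * ((v y t - v x t) * (w y t - w x t))) with (2 * (v y t - v x t) * (w y t - w x t)) by ring.
    apply (is_derive_sq (fun t => v y t - v x t)), is_derive_Rminus; apply Hd; auto. }
  assert (HDc : forall t, a <= t <= b -> continuous Dd t).
  { intros t Ht.
    apply (continuous_esum G L (fun x y t => phi x * phi y * (2 * ((v y t - v x t) * (w y t - w x t))))).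
    intros. repeat apply continuous_Rmult; try apply continuous_Rconst; apply continuous_Rminus; auto. }
  set (Sw := mass G L (fun x t => phi x * w x t)).
  assert (HSwc : forall t, a <= t <= b -> continuous Sw t).
  { intros t Ht. apply mass_continuous. intros. apply continuous_Rmult; [apply continuous_Rconst|auto]. }
  assert (Hint : RInt Sw a b <= - / 3 * RInt Dd a b + 2 / r ^ 2 * RInt (energy G L Phi v) a b).
  { rewrite <- RInt_lin_cont; auto; [|intros; apply energy_continuous; intros; apply Hc; auto].
    apply RInt_le_cont; auto.
    - intros. apply continuous_Rplus; apply continuous_Rmult; try apply continuous_Rconst; auto.
      apply energy_continuous; intros; apply Hc; auto.
    - intros t Ht. unfold Sw, mass.
      rewrite (lsum_ext _ (fun x => vm G x * phi x ^ 2 * w x t ^ 2)) by (intros; ring).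
      apply (cutoff_energy_dissipation G rho phi Phi (fun y => v y t) L r); auto. }
  rewrite (RInt_derive_cont (energy G L phi v) Dd a b Hab HD HDc) in Hint.
  pose proof (energy_nonneg G L phi v b Hp).
  change (RInt Sw a b <= / 3 * energy G L phi v a + 2 / r ^ 2 * RInt (energy G L Phi v) a b). lra.
Qed.

Definition ball_lists {V} (rho : V -> V -> R) (x0 : V) (BL : R -> list V) : Prop :=
  forall r, 0 < r -> NoDup (BL r) /\ forall y, In y (BL r) <-> rho y x0 <= r.

Lemma heat_on_sub {V} (G : wgraph V) v a b a' b' : heat_on G v a b -> a <= a' -> b' <= b -> heat_on G v a' b'.
Proof. intros H Ha Hb x t Ht. apply H. lra. Qed.

Definition lapn_at {V} (G : wgraph V) (U : V -> R -> R) (j : nat) (x : V) (t : R) : R :=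
  lapn G j (fun y => U y t) x.

Definition iterated_heat {V} (G : wgraph V) (U : V -> R -> R) (T : R) : Prop :=
  forall j x t, t < T -> is_derive (lapn_at G U j x) t (lapn_at G U (S j) x t).

Lemma le_0_of_le_div_pow (I K r1 : R) (e : nat) : (1 <= e)%nat ->
  (forall r, r1 <= r -> 1 <= r -> I <= K / r ^ e) -> I <= 0.
Proof.
  intros He H. destruct (Rle_dec I 0) as [|Hn]; auto. exfalso. apply Rnot_le_lt in Hn.
  set (r := Rmax r1 (Rmax 1 (K / I + 1))).
  assert (H1 : r1 <= r) by apply Rmax_l.
  assert (H2 : 1 <= r) by (eapply Rle_trans; [|apply Rmax_r]; apply Rmax_l).
  assert (H3 : K / I + 1 <= r) by (eapply Rle_trans; [|apply Rmax_r]; apply Rmax_r).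
  specialize (H r H1 H2).
  assert (r <= r ^ e) by (rewrite <- (pow_1 r) at 1; apply Rle_pow; auto).
  destruct (Rle_dec K 0).
  - assert (K / r ^ e <= 0); [|lra].
    unfold Rdiv. assert (0 < / r ^ e) by (apply Rinv_0_lt_compat; lra). nra.
  - assert (K / r ^ e <= K / r) by (unfold Rdiv; apply Rmult_le_compat_l; [lra|apply Rinv_le_contravar; lra]).
    assert (K / r < I); [|lra].
    apply (Rmult_lt_reg_r r); [lra|]. replace (K / r * r) with K by (field; lra).
    assert (K / I < r) by lra. apply (Rmult_lt_reg_r (/ I)); [apply Rinv_0_lt_compat; auto|].
    replace (I * r * / I) with r by (field; lra). auto.
Qed.

Section BallEstimates.

Variable V : Type.
Variable G : wgraph V.
Variable rho : V -> V -> R.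
Variable s : R.
Variable x0 : V.
Variable BL : R -> list V.
Hypothesis HI : intrinsic_metric G rho.
Hypothesis Hs : 1 <= s.
Hypothesis Hjump : forall x y, adj G x y -> rho x y <= s.
Hypothesis HBL : ball_lists rho x0 BL.

Lemma adj_dist_le x y : adj G x y -> rho y x0 <= s + rho x x0.
Proof.
  intros A. destruct HI as [_ [_ [Hsym [Htri _]]]].
  pose proof (Htri y x x0). rewrite (Hsym y x) in *. pose proof (Hjump x y A). lra.
Qed.

Lemma cutoff_supported_in r L : 0 < r -> (forall y, rho y x0 <= 2 * r + s -> In y L) ->
  supported_in G L (cutoff rho x0 r).
Proof.
  intros Hr HL x Hx. pose proof (cutoff_neq0 rho x0 r x Hr Hx).
  split; [apply HL; lra|]. intros y A. pose proof (adj_dist_le x y A). apply HL. lra.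
Qed.

Lemma cutoff_nested r x y : 0 < r -> adj G x y -> cutoff rho x0 r x <> cutoff rho x0 r y ->
  cutoff rho x0 (2 * r + s) x = 1 /\ cutoff rho x0 (2 * r + s) y = 1.
Proof.
  intros Hr A Hne.
  assert (rho x x0 <= 2 * r + s /\ rho y x0 <= 2 * r + s) as [Hx Hy].
  { destruct (Req_dec (cutoff rho x0 r x) 0) as [E|E].
    - assert (Ey : cutoff rho x0 r y <> 0) by (intros E'; apply Hne; congruence).
      pose proof (cutoff_neq0 rho x0 r y Hr Ey). pose proof (adj_dist_le y x (adj_sym _ _ _ _ A)). lra.
    - pose proof (cutoff_neq0 rho x0 r x Hr E). pose proof (adj_dist_le x y A). lra. }
  split; apply cutoff_one; lra.
Qed.

Lemma cutoff_le_nested r x : 0 < r -> cutoff rho x0 r x <= cutoff rho x0 (2 * r + s) x.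
Proof.
  intros Hr. destruct (Req_dec (cutoff rho x0 r x) 0) as [->|E]; [apply cutoff_bounds|].
  pose proof (cutoff_neq0 rho x0 r x Hr E).
  rewrite (cutoff_one rho x0 (2 * r + s)) by lra. apply cutoff_bounds.
Qed.

Lemma mass_le_cutoff_mass (w : V -> R -> R) r L t : 0 < r -> NoDup L -> (forall y, rho y x0 <= r -> In y L) ->
  mass G (BL r) w t <= mass G L (fun x t => cutoff rho x0 r x * w x t) t.
Proof.
  intros Hr ND HL. destruct (HBL r) as [NDr Hrl]; [lra|]. unfold mass.
  rewrite (lsum_ext _ (fun x => vm G x * (cutoff rho x0 r x * w x t) ^ 2) (BL r)).
  - apply lsum_incl_le; auto; [intros x Hx; apply HL, Hrl, Hx|].
    intros. apply Rmult_le_pos; [left; apply vm_pos|apply pow2_ge_0].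
  - intros x Hx. apply Hrl in Hx. rewrite cutoff_one; auto. ring.
Qed.

Lemma energy_le_nested v r L t : 0 < r ->
  energy G L (cutoff rho x0 r) v t <= energy G L (cutoff rho x0 (2 * r + s)) v t.
Proof.
  intros Hr. apply esum_le. intros x y _.
  pose proof (cutoff_le_nested r x Hr). pose proof (cutoff_le_nested r y Hr).
  pose proof (cutoff_bounds rho x0 r x). pose proof (cutoff_bounds rho x0 r y).
  apply Rmult_le_compat_r; [apply pow2_ge_0|apply Rmult_le_compat; lra].
Qed.

(* The factor 7 makes [BL (7 r)] contain the support [B_(2r'+s)] of the outer cutoff of radius
   [r' = 2 r + s], as [s <= r]. *)
Lemma laplacian_mass_step v r A T1 : s <= r -> A <= T1 -> heat_on G v (A - r ^ 2) T1 ->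
  RInt (mass G (BL r) (fun x t => laplacian G (fun y => v y t) x)) A T1 <=
  7 / 3 / r ^ 2 * RInt (energy G (BL (7 * r)) (cutoff rho x0 (2 * r + s)) v) (A - r ^ 2) T1.
Proof.
  intros Hsr HAT Hd.
  assert (Hr : 0 < r) by lra. assert (Hr2 : 0 < r ^ 2) by (apply pow_lt; lra).
  destruct (HBL (7 * r)) as [NDL HL]; [lra|].
  set (L := BL (7 * r)) in *. set (phi := cutoff rho x0 r). set (Phi := cutoff rho x0 (2 * r + s)).
  assert (Hc : forall x t, A - r ^ 2 <= t <= T1 -> continuous (v x) t)
    by (intros; eapply heat_on_continuous; eauto).
  set (DP := energy G L Phi v).
  assert (HDPc : forall t, A - r ^ 2 <= t <= T1 -> continuous DP t)
    by (intros; apply energy_continuous; intros; apply Hc; auto).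
  assert (HDP0 : forall t, 0 <= DP t) by (intros; apply energy_nonneg; intros; apply cutoff_bounds).
  destruct (RInt_ge_min_point DP (A - r ^ 2) A) as [a [Ha Hga]]; [lra|intros; apply HDPc; lra|].
  set (Sw := mass G L (fun x t => phi x * laplacian G (fun y => v y t) x)).
  assert (HSwc : forall t, A - r ^ 2 <= t <= T1 -> continuous Sw t).
  { intros t Ht. apply mass_continuous. intros. apply continuous_Rmult; [apply continuous_Rconst|].
    apply continuous_laplacian. intros; apply Hc; auto. }
  assert (F1 : RInt (mass G (BL r) (fun x t => laplacian G (fun y => v y t) x)) A T1 <= RInt Sw a T1).
  { apply Rle_trans with (RInt Sw A T1);
      [|apply RInt_le_shrink_l; [lra|lra|intros; apply HSwc; lra|intros; apply mass_nonneg]].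
    apply RInt_le_cont; auto; [|intros; apply HSwc; lra|].
    - intros. apply mass_continuous. intros. apply continuous_laplacian. intros; apply Hc; lra.
    - intros t Ht. apply mass_le_cutoff_mass; auto. intros y Hy. apply HL. lra. }
  assert (F2 : RInt Sw a T1 <= / 3 * energy G L phi v a + 2 / r ^ 2 * RInt DP a T1).
  { apply (laplacian_mass_integral_bound G rho phi Phi v L r a T1); auto; try lra.
    - intros; apply cutoff_bounds.
    - apply (cutoff_lipschitz G); auto.
    - apply cutoff_supported_in; auto. intros y Hy. apply HL. lra.
    - intros x y A' Hne. apply cutoff_nested; auto.
    - intros; apply cutoff_bounds.
    - apply (heat_on_sub G v (A - r ^ 2) T1); auto; lra. }
  assert (F3 : energy G L phi v a <= DP a) by (apply energy_le_nested; auto).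
  set (X := RInt DP (A - r ^ 2) T1).
  assert (F4 : DP a * r ^ 2 <= X).
  { replace (A - (A - r ^ 2)) with (r ^ 2) in Hga by ring.
    eapply Rle_trans; [apply Hga|apply RInt_le_shrink_r; [lra|lra|intros; apply HDPc; lra|intros; apply HDP0]]. }
  assert (F5 : RInt DP a T1 <= X)
    by (apply RInt_le_shrink_l; [lra|lra|intros; apply HDPc; lra|intros; apply HDP0]).
  assert (Hr2' : 0 <= 2 / r ^ 2) by (unfold Rdiv; apply Rmult_le_pos; [lra|left; apply Rinv_0_lt_compat; auto]).
  assert (DP a <= X / r ^ 2) by (apply (Rmult_le_reg_r (r ^ 2)); auto; field_simplify; lra).
  replace (7 / 3 / r ^ 2 * X) with (/ 3 * (X / r ^ 2) + 2 / r ^ 2 * X) by (field; lra).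
  pose proof (Rmult_le_compat_l (2 / r ^ 2) _ _ Hr2' F5). lra.
Qed.

Lemma energy_step v r A T1 : s <= r -> A <= T1 -> heat_on G v (A - 2 * r ^ 2) T1 ->
  RInt (energy G (BL (7 * r)) (cutoff rho x0 (2 * r + s)) v) (A - r ^ 2) T1 <=
  14 / r ^ 2 * RInt (mass G (BL (7 * r)) v) (A - 2 * r ^ 2) T1.
Proof.
  intros Hsr HAT Hd.
  assert (Hr : 0 < r) by lra. assert (Hr2 : 0 < r ^ 2) by (apply pow_lt; lra).
  destruct (HBL (7 * r)) as [NDL HL]; [lra|].
  set (L := BL (7 * r)) in *. set (r' := 2 * r + s). set (Phi := cutoff rho x0 r').
  assert (Hr' : 0 < r') by (unfold r'; lra).
  assert (Hrr' : r ^ 2 <= r' ^ 2) by (unfold r'; nra).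
  assert (Hc : forall x t, A - 2 * r ^ 2 <= t <= T1 -> continuous (v x) t)
    by (intros; eapply heat_on_continuous; eauto).
  set (DP := energy G L Phi v). set (SL := mass G L v).
  assert (HDPc : forall t, A - 2 * r ^ 2 <= t <= T1 -> continuous DP t)
    by (intros; apply energy_continuous; intros; apply Hc; auto).
  assert (HSLc : forall t, A - 2 * r ^ 2 <= t <= T1 -> continuous SL t)
    by (intros; apply mass_continuous; intros; apply Hc; auto).
  assert (HDP0 : forall t, 0 <= DP t) by (intros; apply energy_nonneg; intros; apply cutoff_bounds).
  assert (HSL0 : forall t, 0 <= SL t) by (intros; apply mass_nonneg).
  destruct (RInt_ge_min_point SL (A - 2 * r ^ 2) (A - r ^ 2)) as [a' [Ha' Hga']];
    [lra|intros; apply HSLc; lra|].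
  set (Y := RInt SL (A - 2 * r ^ 2) T1).
  assert (F1 : SL a' * r ^ 2 <= Y).
  { replace (A - r ^ 2 - (A - 2 * r ^ 2)) with (r ^ 2) in Hga' by ring.
    eapply Rle_trans; [apply Hga'|apply RInt_le_shrink_r; [lra|lra|intros; apply HSLc; lra|intros; apply HSL0]]. }
  assert (F2 : RInt DP (A - r ^ 2) T1 <= RInt DP a' T1)
    by (apply RInt_le_shrink_l; [lra|lra|intros; apply HDPc; lra|intros; apply HDP0]).
  assert (F3 : RInt DP a' T1 <= 2 * SL a' + 12 / r' ^ 2 * RInt SL a' T1).
  { apply (energy_integral_bound G rho Phi v L r' a' T1); auto; try lra.
    - intros; apply cutoff_bounds.
    - apply (cutoff_lipschitz G); auto.
    - apply cutoff_supported_in; auto. intros y Hy. apply HL. unfold r' in Hy. lra.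
    - apply (heat_on_sub G v (A - 2 * r ^ 2) T1); auto; lra. }
  assert (F4 : RInt SL a' T1 <= Y)
    by (apply RInt_le_shrink_l; [lra|lra|intros; apply HSLc; lra|intros; apply HSL0]).
  assert (HY0 : 0 <= RInt SL a' T1) by (apply RInt_ge_0_cont; auto; try lra; intros; apply HSLc; lra).
  assert (F5 : 12 / r' ^ 2 * RInt SL a' T1 <= 12 / r ^ 2 * Y).
  { apply Rmult_le_compat; auto.
    - unfold Rdiv; apply Rmult_le_pos; [lra|left; apply Rinv_0_lt_compat; nra].
    - unfold Rdiv. apply Rmult_le_compat_l; [lra|apply Rinv_le_contravar; auto]. }
  assert (2 * SL a' <= 2 / r ^ 2 * Y) by (apply (Rmult_le_reg_r (r ^ 2)); auto; field_simplify; lra).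
  replace (14 / r ^ 2 * Y) with (2 / r ^ 2 * Y + 12 / r ^ 2 * Y) by (field; lra).
  change (RInt DP (A - r ^ 2) T1 <= 2 / r ^ 2 * Y + 12 / r ^ 2 * Y). lra.
Qed.

Lemma caccioppoli_step v r A T1 : s <= r -> A <= T1 -> heat_on G v (A - 2 * r ^ 2) T1 ->
  RInt (mass G (BL r) (fun x t => laplacian G (fun y => v y t) x)) A T1 <=
  42 / r ^ 4 * RInt (mass G (BL (7 * r)) v) (A - 2 * r ^ 2) T1.
Proof.
  intros Hsr HAT Hd.
  assert (Hr : 0 < r) by lra. assert (Hr2 : 0 < r ^ 2) by (apply pow_lt; lra).
  pose proof (laplacian_mass_step v r A T1 Hsr HAT
                (heat_on_sub G v _ _ (A - r ^ 2) T1 Hd ltac:(lra) ltac:(lra))) as H1.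
  pose proof (energy_step v r A T1 Hsr HAT Hd) as H2.
  assert (0 <= RInt (mass G (BL (7 * r)) v) (A - 2 * r ^ 2) T1).
  { apply RInt_ge_0_cont; [lra| |intros; apply mass_nonneg].
    intros; apply mass_continuous; intros; eapply heat_on_continuous; eauto. }
  assert (0 <= 7 / 3 / r ^ 2) by (unfold Rdiv; apply Rmult_le_pos; [lra|left; apply Rinv_0_lt_compat; auto]).
  eapply Rle_trans; [apply H1|]. eapply Rle_trans; [apply Rmult_le_compat_l; [auto|apply H2]|].
  replace (7 / 3 / r ^ 2 * (14 / r ^ 2 * RInt (mass G (BL (7 * r)) v) (A - 2 * r ^ 2) T1))
    with (98 / 3 / r ^ 4 * RInt (mass G (BL (7 * r)) v) (A - 2 * r ^ 2) T1) by (field; lra).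
  apply Rmult_le_compat_r; auto. unfold Rdiv.
  apply Rmult_le_compat_r; [left; apply Rinv_0_lt_compat, pow_lt; lra|lra].
Qed.


Lemma iterated_heat_on U T j a b : iterated_heat G U T -> b < T -> heat_on G (lapn_at G U j) a b.
Proof. intros H Hb x t Ht. apply H. lra. Qed.

Lemma caccioppoli_iterate U T T1 : iterated_heat G U T -> T1 < T ->
  forall j r A, s <= r -> A <= T1 ->
  RInt (mass G (BL r) (lapn_at G U j)) A T1 <=
  42 ^ j / r ^ (4 * j) * RInt (mass G (BL (7 ^ j * r)) U) (A - 51 ^ j * r ^ 2) T1.
Proof.
  intros Hd HT.
  assert (Mono : forall R0 a a', a <= a' -> a' <= T1 ->
            RInt (mass G (BL R0) U) a' T1 <= RInt (mass G (BL R0) U) a T1).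
  { intros. apply RInt_le_shrink_l; auto; [|intros; apply mass_nonneg].
    intros. apply mass_continuous. intros. eapply (heat_on_continuous G (lapn_at G U 0)); eauto.
    apply (iterated_heat_on U T 0 a T1 Hd HT). }
  intros j; induction j; intros r A Hsr HA.
  - simpl. unfold Rdiv. rewrite Rinv_1, !Rmult_1_l.
    apply Mono; [pose proof (pow2_ge_0 r); lra|auto].
  - assert (Hr : 0 < r) by lra. assert (Hr2 : 0 < r ^ 2) by (apply pow_lt; lra).
    eapply Rle_trans; [apply (caccioppoli_step (lapn_at G U j) r A T1); auto|].
    { apply (iterated_heat_on U T j _ T1 Hd HT). }
    pose proof (IHj (7 * r) (A - 2 * r ^ 2) ltac:(lra) ltac:(lra)) as IH.
    set (I0 := RInt (mass G (BL (7 ^ j * (7 * r))) U) (A - 2 * r ^ 2 - 51 ^ j * (7 * r) ^ 2) T1) in IH.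
    set (I1 := RInt (mass G (BL (7 ^ S j * r)) U) (A - 51 ^ S j * r ^ 2) T1).
    assert (H51 : 0 <= 51 ^ j * (7 * r) ^ 2) by (apply Rmult_le_pos; [apply pow_le; lra|apply pow2_ge_0]).
    assert (HI01 : I0 <= I1).
    { unfold I0, I1. replace (7 ^ j * (7 * r)) with (7 ^ S j * r) by (simpl; ring).
      apply Mono; [|lra]. assert (1 <= 51 ^ j) by (apply pow_R1_Rle; lra). simpl. nra. }
    assert (HI0 : 0 <= I0).
    { apply RInt_ge_0_cont; [lra| |intros; apply mass_nonneg].
      intros. apply mass_continuous. intros. eapply (heat_on_continuous G (lapn_at G U 0)); eauto.
      apply (iterated_heat_on U T 0 _ T1 Hd HT). }
    clearbody I0 I1. change (CompleteSpace.sort R_CompleteNormedModule) with R in *.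
    assert (P1 : 0 < r ^ (4 * j)) by (apply pow_lt; lra).
    assert (P2 : r ^ (4 * j) <= (7 * r) ^ (4 * j)) by (apply pow_incr; lra).
    assert (P3 : 0 < r ^ 4) by (apply pow_lt; lra).
    assert (P4 : 0 < 42 ^ j) by (apply pow_lt; lra).
    replace (4 * S j)%nat with (4 + 4 * j)%nat by lia. rewrite pow_add. simpl (42 ^ S j).
    assert (42 ^ j / (7 * r) ^ (4 * j) * I0 <= 42 ^ j / r ^ (4 * j) * I1).
    { unfold Rdiv. rewrite !Rmult_assoc. apply Rmult_le_compat_l; [lra|].
      apply Rmult_le_compat; auto; [left; apply Rinv_0_lt_compat; lra|apply Rinv_le_contravar; auto]. }
    replace (42 * 42 ^ j / (r ^ 4 * r ^ (4 * j)) * I1) with (42 / r ^ 4 * (42 ^ j / r ^ (4 * j) * I1))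
      by (field; lra).
    apply Rmult_le_compat_l; [unfold Rdiv; apply Rmult_le_pos; [lra|left; apply Rinv_0_lt_compat; auto]|lra].
Qed.

Lemma mass_ball_mono v r1 r2 t : 0 < r1 <= r2 -> mass G (BL r1) v t <= mass G (BL r2) v t.
Proof.
  intros Hr. destruct (HBL r1) as [ND1 H1]; [lra|]. destruct (HBL r2) as [ND2 H2]; [lra|].
  apply lsum_incl_le; auto.
  - intros y Hy. apply H2. apply H1 in Hy. lra.
  - intros. apply Rmult_le_pos; [left; apply vm_pos|apply pow2_ge_0].
Qed.

Lemma mass_growth_bound U Cv p CU q :
  (forall r, 1 <= r -> lsum (vm G) (BL r) <= Cv * r ^ p) ->
  (forall r, 1 <= r -> forall x t, rho x x0 <= r -> - r ^ 2 <= t <= 0 -> Rabs (U x t) <= CU * r ^ q) ->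
  forall r t, 1 <= r -> - r ^ 2 <= t <= 0 -> mass G (BL r) U t <= CU ^ 2 * Cv * r ^ (2 * q + p).
Proof.
  intros HV HU r t Hr Ht. destruct (HBL r) as [_ Hrl]; [lra|].
  apply Rle_trans with (lsum (fun x => (CU * r ^ q) ^ 2 * vm G x) (BL r)).
  - apply lsum_le. intros y Hy. apply Hrl in Hy.
    assert (U y t ^ 2 <= (CU * r ^ q) ^ 2) by (apply pow_maj_Rabs, HU; auto).
    pose proof (vm_pos _ G y). nra.
  - rewrite lsum_scal, pow_add.
    replace (r ^ (2 * q)) with ((r ^ q) ^ 2) by (rewrite <- pow_mult; f_equal; lia).
    replace (CU ^ 2 * Cv * ((r ^ q) ^ 2 * r ^ p)) with ((CU * r ^ q) ^ 2 * (Cv * r ^ p)) by ring.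
    apply Rmult_le_compat_l; [apply pow2_ge_0|apply HV; auto].
Qed.

Lemma mass_le_0_zero v r t x : 0 < r -> mass G (BL r) v t <= 0 -> rho x x0 <= r -> v x t = 0.
Proof.
  intros Hr Hm Hx. destruct (HBL r) as [ND Hrl]; [lra|].
  assert (vm G x * v x t ^ 2 <= 0).
  { eapply Rle_trans; [|apply Hm].
    replace (vm G x * v x t ^ 2) with (lsum (fun x => vm G x * v x t ^ 2) (x :: nil)) by (simpl; ring).
    apply lsum_incl_le.
    - constructor; [simpl; auto|constructor].
    - intros y [<-|[]]. apply Hrl. auto.
    - intros. apply Rmult_le_pos; [left; apply vm_pos|apply pow2_ge_0]. }
  pose proof (vm_pos _ G x). pose proof (pow2_ge_0 (v x t)).
  apply (Rsqr_0_uniq (v x t)). rewrite Rsqr_pow2. nra.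
Qed.

(* The time window [[A0 - 51^J r^2, T1]] fits in [[-(c r)^2, 0]], and [B_{7^J r}] in [B_{c r}]. *)
Lemma lapn_mass_integral_le U Cv p CU q J T1 A0 : iterated_heat G U 0 -> A0 < T1 < 0 ->
  (forall r, 1 <= r -> lsum (vm G) (BL r) <= Cv * r ^ p) ->
  (forall r, 1 <= r -> forall x t, rho x x0 <= r -> - r ^ 2 <= t <= 0 -> Rabs (U x t) <= CU * r ^ q) ->
  let c := Rabs A0 + 51 ^ J + 7 ^ J + 1 in
  forall r, s <= r ->
  RInt (mass G (BL r) (lapn_at G U J)) A0 T1 <=
  42 ^ J * (CU ^ 2 * Cv * c ^ (2 * q + p)) * (T1 - A0 + 51 ^ J) * r ^ (2 * q + p + 2) / r ^ (4 * J).
Proof.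
  intros Hd HT HV HU c r Hr.
  assert (H51 : 1 <= 51 ^ J) by (apply pow_R1_Rle; lra). assert (H7 : 1 <= 7 ^ J) by (apply pow_R1_Rle; lra).
  assert (Hr2 : 1 <= r ^ 2) by (rewrite <- (pow1 2); apply pow_incr; lra).
  assert (Hc1 : 1 <= c) by (unfold c; pose proof (Rabs_pos A0); lra).
  assert (HCU : 0 <= CU ^ 2 * Cv).
  { apply Rmult_le_pos; [apply pow2_ge_0|].
    specialize (HV 1 ltac:(lra)). rewrite pow1 in HV.
    assert (0 <= lsum (vm G) (BL 1)) by (apply lsum_nonneg; intros; left; apply vm_pos). lra. }
  set (M := CU ^ 2 * Cv * (c * r) ^ (2 * q + p)).
  assert (Hwin : - (c * r) ^ 2 <= A0 - 51 ^ J * r ^ 2).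
  { pose proof (Rle_abs (- A0)) as HA0. rewrite Rabs_Ropp in HA0.
    assert (c * r ^ 2 <= (c * r) ^ 2) by (rewrite Rpow_mult_distr; nra). unfold c in *. nra. }
  assert (Hcont : forall t, A0 - 51 ^ J * r ^ 2 <= t <= T1 -> continuous (mass G (BL (c * r)) U) t).
  { intros. apply mass_continuous. intros.
    apply (heat_on_continuous G (lapn_at G U 0) (A0 - 51 ^ J * r ^ 2) T1); auto.
    apply (iterated_heat_on U 0 0); [apply Hd|lra]. }
  assert (Hcr : 7 ^ J * r <= c * r) by (unfold c; pose proof (Rabs_pos A0); nra).
  eapply Rle_trans; [apply (caccioppoli_iterate U 0 T1 Hd); lra|].
  assert (HRI : RInt (mass G (BL (7 ^ J * r)) U) (A0 - 51 ^ J * r ^ 2) T1 <= M * ((T1 - A0 + 51 ^ J) * r ^ 2)).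
  { eapply Rle_trans.
    - apply RInt_le_cont with (g := mass G (BL (c * r)) U); [nra| |auto|].
      + intros. apply mass_continuous. intros.
        apply (heat_on_continuous G (lapn_at G U 0) (A0 - 51 ^ J * r ^ 2) T1); auto.
        apply (iterated_heat_on U 0 0); [apply Hd|lra].
      + intros. apply mass_ball_mono. nra.
    - eapply Rle_trans; [apply RInt_le_const; [nra|auto|]|].
      + intros t Ht. apply mass_growth_bound; auto; nra.
      + apply Rmult_le_compat_l; [unfold M; apply Rmult_le_pos; [auto|apply pow_le; nra]|nra]. }
  change (CompleteSpace.sort R_CompleteNormedModule) with R in *.
  assert (0 <= 42 ^ J / r ^ (4 * J))
    by (unfold Rdiv; apply Rmult_le_pos; [apply pow_le; lra|left; apply Rinv_0_lt_compat, pow_lt; lra]).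
  eapply Rle_trans; [apply Rmult_le_compat_l; [auto|apply HRI]|].
  right. unfold M. rewrite Rpow_mult_distr, (pow_add r (2 * q + p) 2). field. apply pow_nonzero. lra.
Qed.

(* Each Caccioppoli step gains [r^-4], while the growth of [U] only costs a fixed power of [r]. *)
Lemma lapn_vanish U Cv p CU q J : iterated_heat G U 0 ->
  (forall r, 1 <= r -> lsum (vm G) (BL r) <= Cv * r ^ p) ->
  (forall r, 1 <= r -> forall x t, rho x x0 <= r -> - r ^ 2 <= t <= 0 -> Rabs (U x t) <= CU * r ^ q) ->
  (2 + p + 2 * q < 4 * J)%nat ->
  forall x t, t < 0 -> lapn_at G U J x t = 0.
Proof.
  intros Hd HV HU HJ x t Ht.
  set (T1 := t / 2). set (A0 := t - 1). set (r0 := Rmax s (rho x x0)).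
  assert (Hr0s : s <= r0) by apply Rmax_l. assert (Hr0x : rho x x0 <= r0) by apply Rmax_r.
  assert (Hheat : heat_on G (lapn_at G U J) A0 T1) by (apply (iterated_heat_on U 0); [apply Hd|unfold T1; lra]).
  assert (Hc : forall r t, A0 <= t <= T1 -> continuous (mass G (BL r) (lapn_at G U J)) t).
  { intros. apply mass_continuous. intros. eapply heat_on_continuous; eauto. }
  set (e := (4 * J - (2 + p + 2 * q))%nat).
  pose proof (lapn_mass_integral_le U Cv p CU q J T1 A0 Hd ltac:(unfold A0, T1; lra) HV HU) as Hbound.
  cbv zeta in Hbound.
  set (K := 42 ^ J * (CU ^ 2 * Cv * (Rabs A0 + 51 ^ J + 7 ^ J + 1) ^ (2 * q + p)) * (T1 - A0 + 51 ^ J)) in Hbound.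
  assert (HI0 : RInt (mass G (BL r0) (lapn_at G U J)) A0 T1 <= 0).
  { apply (le_0_of_le_div_pow _ K r0 e); [unfold e; lia|]. intros r Hr Hr1.
    eapply Rle_trans; [apply RInt_le_cont with (g := mass G (BL r) (lapn_at G U J))|].
    - unfold A0, T1; lra.
    - auto.
    - auto.
    - intros. apply mass_ball_mono. lra.
    - eapply Rle_trans; [apply Hbound; lra|]. right.
      replace (4 * J)%nat with (e + (2 * q + p + 2))%nat by (unfold e; lia).
      rewrite (pow_add r e). field. split; apply pow_nonzero; lra. }
  apply (mass_le_0_zero (lapn_at G U J) r0 t x); [lra| |auto].
  apply Req_le, (RInt_le_0_zero _ A0 T1); auto; [unfold A0, T1; lra|intros; apply mass_nonneg|unfold A0, T1; lra].
Qed.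

End BallEstimates.

(** * Ancient solutions are polynomials in time *)

Lemma ball_R (x e y : R) : ball x e y <-> Rabs (y - x) < e.
Proof. unfold ball; simpl. unfold AbsRing_ball, abs, minus, plus, opp; simpl. tauto. Qed.

Lemma at_left_eps (f : R -> R) l : filterlim f (at_left 0) (locally l) ->
  forall eps, 0 < eps -> exists d, 0 < d /\ forall h, - d < h < 0 -> Rabs (f h - l) < eps.
Proof.
  intros H eps Heps.
  assert (Hl : locally l (fun y => Rabs (y - l) < eps))
    by (exists (mkposreal eps Heps); intros y Hy; apply ball_R, Hy).
  destruct (H _ Hl) as [d Hd]. exists d. split; [apply cond_pos|].
  intros h Hh. apply Hd; [|lra]. apply ball_R. rewrite Rminus_0_r. apply Rabs_def1; lra.
Qed.

Lemma at_right_eps (f : R -> R) l : filterlim f (at_right 0) (locally l) ->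
  forall eps, 0 < eps -> exists d, 0 < d /\ forall h, 0 < h < d -> Rabs (f h - l) < eps.
Proof.
  intros H eps Heps.
  assert (Hl : locally l (fun y => Rabs (y - l) < eps))
    by (exists (mkposreal eps Heps); intros y Hy; apply ball_R, Hy).
  destruct (H _ Hl) as [d Hd]. exists d. split; [apply cond_pos|].
  intros h Hh. apply Hd; [|lra]. apply ball_R. rewrite Rminus_0_r. apply Rabs_def1; lra.
Qed.

Lemma eps_at_left (f : R -> R) l :
  (forall eps, 0 < eps -> exists d, 0 < d /\ forall h, - d < h < 0 -> Rabs (f h - l) < eps) ->
  filterlim f (at_left 0) (locally l).
Proof.
  intros H P [eps HP]. destruct (H eps (cond_pos eps)) as [d [Hd Hd']].
  exists (mkposreal d Hd). intros y Hy Hneg. apply HP, ball_R, Hd'.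
  apply ball_R in Hy. assert (Hy' : Rabs (y - 0) < d) by exact Hy.
  rewrite Rminus_0_r in Hy'. apply Rabs_def2 in Hy'. lra.
Qed.

Definition diff_quot (f : R -> R) (t h : R) : R := (f (t + h) - f t) / h.

Lemma two_sided_derive (f : R -> R) t l :
  filterlim (diff_quot f t) (at_left 0) (locally l) -> filterlim (diff_quot f t) (at_right 0) (locally l) ->
  is_derive f t l.
Proof.
  intros H1 H2. apply is_derive_Reals. intros eps Heps.
  destruct (at_left_eps _ _ H1 eps Heps) as [d1 [Hd1 Hd1']].
  destruct (at_right_eps _ _ H2 eps Heps) as [d2 [Hd2 Hd2']].
  exists (mkposreal _ (Rmin_pos _ _ Hd1 Hd2)). intros h Hh0 Hh. simpl in Hh.
  pose proof (Rmin_l d1 d2). pose proof (Rmin_r d1 d2). apply Rabs_def2 in Hh.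
  destruct (Rlt_or_le h 0); [apply (Hd1' h)|apply (Hd2' h)]; lra.
Qed.

Definition left_cont0 (f : R -> R) : Prop := filterlim f (at_left 0) (locally (f 0)).

Lemma left_cont0_of_diff_quot (f : R -> R) l : filterlim (diff_quot f 0) (at_left 0) (locally l) -> left_cont0 f.
Proof.
  intros H. apply eps_at_left. intros eps Heps.
  destruct (at_left_eps _ _ H 1 ltac:(lra)) as [d [Hd Hd']].
  pose proof (Rabs_pos l).
  assert (0 < eps / (Rabs l + 1)) by (apply Rdiv_lt_0_compat; lra).
  exists (Rmin d (eps / (Rabs l + 1))). split; [apply Rmin_pos; auto|].
  intros h Hh. pose proof (Rmin_l d (eps / (Rabs l + 1))). pose proof (Rmin_r d (eps / (Rabs l + 1))).
  specialize (Hd' h ltac:(lra)). unfold diff_quot in Hd'. rewrite Rplus_0_l in Hd'.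
  set (q := (f h - f 0) / h) in *.
  replace (f h - f 0) with (h * q) by (unfold q; field; lra). rewrite Rabs_mult.
  assert (Rabs q < Rabs l + 1) by (pose proof (Rabs_triang_inv q l); lra).
  assert (Rabs h < eps / (Rabs l + 1)) by (rewrite Rabs_left; lra).
  pose proof (Rabs_pos q). pose proof (Rabs_pos h).
  apply Rle_lt_trans with (Rabs h * (Rabs l + 1)); [apply Rmult_le_compat_l; lra|].
  apply Rlt_le_trans with (eps / (Rabs l + 1) * (Rabs l + 1)); [apply Rmult_lt_compat_r; lra|].
  right. field. lra.
Qed.

Section FilterLimits.

Context {T : Type} {F : (T -> Prop) -> Prop} {FF : Filter F}.

Lemma filterlim_Rplus (f g : T -> R) a b :
  filterlim f F (locally a) -> filterlim g F (locally b) -> filterlim (fun x => f x + g x) F (locally (a + b)).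
Proof. intros. eapply filterlim_comp_2; eauto. apply (filterlim_plus a b). Qed.

Lemma filterlim_Rscal (f : T -> R) c a :
  filterlim f F (locally a) -> filterlim (fun x => c * f x) F (locally (c * a)).
Proof. intros. eapply filterlim_comp; eauto. apply (filterlim_scal_r c a). Qed.

Lemma filterlim_Rminus (f g : T -> R) a b :
  filterlim f F (locally a) -> filterlim g F (locally b) -> filterlim (fun x => f x - g x) F (locally (a - b)).
Proof.
  intros. apply filterlim_Rplus; auto.
  apply (filterlim_ext (fun x => -1 * g x)); [intros; ring|].
  replace (- b) with (-1 * b) by ring. apply filterlim_Rscal; auto.
Qed.

Lemma filterlim_lsum {A} (f : A -> T -> R) (a : A -> R) l :
  (forall y, In y l -> filterlim (f y) F (locally (a y))) ->
  filterlim (fun x => lsum (fun y => f y x) l) F (locally (lsum a l)).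
Proof.
  induction l; intros H; simpl; [apply filterlim_const|].
  apply filterlim_Rplus; [apply H; simpl; auto|apply IHl; intros; apply H; simpl; auto].
Qed.

Lemma filterlim_nsum (f : nat -> T -> R) (a : nat -> R) n :
  (forall i, (i < n)%nat -> filterlim (f i) F (locally (a i))) ->
  filterlim (fun x => nsum n (fun i => f i x)) F (locally (nsum n a)).
Proof.
  induction n; intros H; simpl; [apply filterlim_const|].
  apply filterlim_Rplus; [apply IHn; intros; apply H; lia|apply H; lia].
Qed.

Lemma filterlim_lapn {V} (G : wgraph V) n (f : V -> T -> R) (a : V -> R) x :
  (forall y, filterlim (f y) F (locally (a y))) ->
  filterlim (fun z => lapn G n (fun y => f y z) x) F (locally (lapn G n a x)).
Proof.
  revert x. induction n; intros x H; simpl; auto.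
  apply (filterlim_lsum (fun y z => ew G x y / vm G x *
                                      (lapn G n (fun y0 => f y0 z) y - lapn G n (fun y0 => f y0 z) x))).
  intros. apply filterlim_Rscal, filterlim_Rminus; auto.
Qed.

End FilterLimits.

Lemma diff_quot_lapn {V} (G : wgraph V) n (u : V -> R -> R) x t h :
  diff_quot (lapn_at G u n x) t h = lapn G n (fun y => diff_quot (u y) t h) x.
Proof.
  unfold diff_quot, lapn_at, Rdiv.
  rewrite (lapn_ext G n (fun y => (u y (t + h) - u y t) * / h)
             (fun y => nsum 2 (fun i => (if Nat.eq_dec i 0 then / h else - / h) *
                                        (if Nat.eq_dec i 0 then u y (t + h) else u y t))))
    by (intros y; simpl; ring).
  rewrite lapn_nsum. simpl. ring.
Qed.

Lemma ancient_iterated_heat {V} (G : wgraph V) (u : V -> R -> R) : ancient_solution G u -> iterated_heat G u 0.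
Proof.
  intros H j x t Ht.
  apply two_sided_derive;
    (apply (filterlim_ext (fun h => lapn G j (fun y => diff_quot (u y) t h) x));
       [intros; symmetry; apply diff_quot_lapn|]);
    unfold lapn_at; rewrite lapn_S_r; apply (filterlim_lapn G j (fun y h => diff_quot (u y) t h)); intros y.
  - apply (H y t ltac:(lra)).
  - apply (H y t ltac:(lra)), Ht.
Qed.

Lemma ancient_left_cont0 {V} (G : wgraph V) (u : V -> R -> R) : ancient_solution G u ->
  forall j x, left_cont0 (lapn_at G u j x).
Proof.
  intros H j x. apply (filterlim_lapn G j (fun y h => u y h)). intros y.
  apply (left_cont0_of_diff_quot (u y) _ (proj1 (H y 0 ltac:(lra)))).
Qed.

Lemma left_cont0_zero (f : R -> R) : left_cont0 f -> (forall t, t < 0 -> f t = 0) -> f 0 = 0.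
Proof.
  intros H Hz. destruct (Req_dec (f 0) 0) as [|Hne]; auto. exfalso.
  destruct (at_left_eps f (f 0) H (Rabs (f 0)) (Rabs_pos_lt _ Hne)) as [d [Hd Hd']].
  specialize (Hd' (- d / 2) ltac:(lra)). rewrite Hz, Rminus_0_l, Rabs_Ropp in Hd' by lra. lra.
Qed.

Lemma continuous_left_cont0 (f : R -> R) : continuous f 0 -> left_cont0 f.
Proof. intros H P HP. destruct (H P HP) as [d Hd]. exists d. intros y Hy _. apply Hd; auto. Qed.

Lemma left_cont0_minus (f g : R -> R) : left_cont0 f -> left_cont0 g -> left_cont0 (fun t => f t - g t).
Proof. intros. apply filterlim_Rminus; auto. Qed.

Lemma zero_derivative_left (g : R -> R) : (forall t, t < 0 -> is_derive g t 0) -> left_cont0 g -> g 0 = 0 ->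
  forall t, t <= 0 -> g t = 0.
Proof.
  intros Hd Hc H0 t Ht. destruct (Req_dec t 0) as [->|Htn]; auto.
  assert (Hconst : forall t', t < t' < 0 -> g t' = g t).
  { intros t' Ht'. destruct (MVT_cor2 g (fun _ => 0) t t') as [c [Hc1 Hc2]]; [lra| |lra].
    intros c Hc'. apply is_derive_Reals, Hd. lra. }
  destruct (Req_dec (g t) 0) as [|Hne]; auto. exfalso.
  destruct (at_left_eps g (g 0) Hc (Rabs (g t)) (Rabs_pos_lt _ Hne)) as [d [Hd1 Hd2]].
  set (t' := Rmax (t / 2) (- d / 2)).
  assert (t < t' < 0 /\ - d < t' < 0) as [H1 H2] by (unfold t', Rmax; destruct Rle_dec; lra).
  specialize (Hd2 t' H2). rewrite Hconst, H0, Rminus_0_r in Hd2 by auto. lra.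
Qed.

Lemma is_derive_pow_id (d : nat) (t : R) : is_derive (fun t => t ^ d) t (INR d * t ^ pred d).
Proof.
  replace (INR d * t ^ pred d) with (INR d * 1 * t ^ pred d) by ring.
  apply (is_derive_pow (fun t => t)), (is_derive_id (K := R_AbsRing)).
Qed.

Lemma finite_taylor_left (w : nat -> R -> R) J :
  (forall j t, t < 0 -> is_derive (w j) t (w (S j) t)) -> (forall j, left_cont0 (w j)) ->
  (forall t, t < 0 -> w J t = 0) ->
  forall n j, (j + n = J)%nat -> forall t, t <= 0 ->
    w j t = nsum n (fun d => w (j + d)%nat 0 * t ^ d / INR (fact d)).
Proof.
  intros Hd Hcl HJ n. induction n; intros j Hj t Ht.
  - simpl. rewrite Nat.add_0_r in Hj. subst j.
    destruct (Req_dec t 0) as [->|]; [apply left_cont0_zero; auto|apply HJ; lra].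
  - set (F := fun t => nsum (S n) (fun d => w (j + d)%nat 0 * t ^ d / INR (fact d))).
    set (F' := fun t => nsum (S n) (fun d => w (j + d)%nat 0 * (INR d * t ^ pred d) / INR (fact d))).
    assert (HF : forall t, is_derive F t (F' t)).
    { intros u. apply (is_derive_nsum (fun d t => w (j + d)%nat 0 * t ^ d / INR (fact d))
         (fun d t => w (j + d)%nat 0 * (INR d * t ^ pred d) / INR (fact d))). intros i _.
      apply (is_derive_ext (fun t => (w (j + i)%nat 0 / INR (fact i)) * t ^ i));
        [intros; simpl; unfold Rdiv; ring|].
      replace (w (j + i)%nat 0 * (INR i * u ^ pred i) / INR (fact i))
        with (w (j + i)%nat 0 / INR (fact i) * (INR i * u ^ pred i)) by (unfold Rdiv; ring).
      apply is_derive_Rscal, is_derive_pow_id. }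
    assert (HF' : forall t, t <= 0 -> F' t = w (S j) t).
    { intros u Hu. rewrite (IHn (S j)) by (auto; lia). unfold F'. rewrite nsum_shift. simpl (INR 0).
      rewrite Rmult_0_l, Rmult_0_r, Rdiv_0_l, Rplus_0_l. apply nsum_ext. intros i _.
      replace (j + S i)%nat with (S j + i)%nat by lia. simpl (pred (S i)).
      rewrite fact_simpl, mult_INR, S_INR.
      pose proof (INR_fact_neq_0 i). pose proof (pos_INR i). field. split; auto; lra. }
    set (g := fun t => w j t - F t).
    assert (Hg : forall t, t < 0 -> is_derive g t 0).
    { intros u Hu. replace 0 with (w (S j) u - F' u) by (rewrite HF'; lra).
      apply is_derive_Rminus; [apply Hd; auto|apply HF]. }
    assert (Hgcl : left_cont0 g)
      by (apply left_cont0_minus; [apply Hcl|apply continuous_left_cont0; eapply is_derive_continuous_R; apply HF]).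
    assert (Hg0 : g 0 = 0).
    { unfold g, F. rewrite nsum_shift, (nsum_ext _ _ (fun _ => 0)), nsum_zero.
      - rewrite Nat.add_0_r. simpl. field.
      - intros i _. simpl pow. rewrite Rmult_0_l, Rmult_0_r. unfold Rdiv. apply Rmult_0_l. }
    pose proof (zero_derivative_left g Hg Hgcl Hg0 t Ht) as Hgt. unfold g in Hgt. change (w j t = F t). lra.
Qed.

(** * Coefficients of a bounded polynomial *)

Lemma sum_f_R0_nsum F n : sum_f_R0 F n = nsum (S n) F.
Proof. induction n; simpl; [ring|]. simpl in IHn. rewrite IHn. ring. Qed.

Lemma binomial_C_diag n : Binomial.C n n = 1.
Proof. unfold Binomial.C. rewrite Nat.sub_diag. simpl. field. apply INR_fact_neq_0. Qed.

Lemma binomial_C_pred n : Binomial.C (S n) n = INR (S n).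
Proof.
  unfold Binomial.C. replace (S n - n)%nat with 1%nat by lia.
  rewrite fact_simpl, mult_INR. simpl (fact 1).
  pose proof (INR_fact_neq_0 n). simpl (INR 1). field. auto.
Qed.

Lemma pow_add_sub_pow t h j : (t + h) ^ j - t ^ j = nsum j (fun i => Binomial.C j i * t ^ i * h ^ (j - i)).
Proof. rewrite binomial, sum_f_R0_nsum. simpl. rewrite binomial_C_diag, Nat.sub_diag. simpl. ring. Qed.

Lemma nsum_ltb n j (F : nat -> R) : (j <= n)%nat -> nsum n (fun i => if Nat.ltb i j then F i else 0) = nsum j F.
Proof.
  induction n; intros H.
  - replace j with 0%nat by lia. reflexivity.
  - destruct (Nat.eq_dec j (S n)) as [->|Hne].
    + apply nsum_ext. intros i Hi. destruct (Nat.ltb_spec i (S n)); auto; lia.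
    + simpl. rewrite IHn by lia. destruct (Nat.ltb_spec n j); [lia|ring].
Qed.

Lemma poly_forward_difference (c : nat -> R) m h : exists c' : nat -> R, c' m = INR (S m) * h * c (S m) /\
  forall t, nsum (S (S m)) (fun j => c j * (t + h) ^ j) - nsum (S (S m)) (fun j => c j * t ^ j)
            = nsum (S m) (fun i => c' i * t ^ i).
Proof.
  exists (fun i => nsum (S (S m)) (fun j => if Nat.ltb i j then c j * Binomial.C j i * h ^ (j - i) else 0)). split.
  - change (nsum (S (S m)) ?F) with (nsum (S m) F + F (S m)).
    rewrite (nsum_ext _ _ (fun _ => 0)), nsum_zero.
    + destruct (Nat.ltb_spec m (S m)); [|lia]. rewrite binomial_C_pred.
      replace (S m - m)%nat with 1%nat by lia. ring.
    + intros i Hi. destruct (Nat.ltb_spec m i); [lia|auto].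
  - intros t. rewrite <- nsum_minus.
    rewrite (nsum_ext _ _ (fun j => nsum (S m) (fun i =>
               if Nat.ltb i j then c j * Binomial.C j i * h ^ (j - i) * t ^ i else 0))).
    + rewrite nsum_swap. apply nsum_ext. intros i _. rewrite <- (Rmult_comm (t ^ i)), <- nsum_scal.
      apply nsum_ext. intros j _. destruct (Nat.ltb i j); ring.
    + intros j Hj. replace (c j * (t + h) ^ j - c j * t ^ j) with (c j * ((t + h) ^ j - t ^ j)) by ring.
      rewrite pow_add_sub_pow, <- nsum_scal, <- (nsum_ltb (S m) j) by lia. apply nsum_ext.
      intros i _. destruct (Nat.ltb i j); ring.
Qed.

(* [d] forward differences of step [h] isolate [d! h^d c_d], at the cost of a factor [2^d]. *)
Lemma poly_top_coef_bound d : forall (c : nat -> R) a h B, 0 < h ->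
  (forall t, a <= t <= a + INR d * h -> Rabs (nsum (S d) (fun j => c j * t ^ j)) <= B) ->
  INR (fact d) * h ^ d * Rabs (c d) <= 2 ^ d * B.
Proof.
  induction d; intros c a h B Hh Hb.
  - specialize (Hb a ltac:(simpl; lra)). simpl in *. rewrite Rplus_0_l, Rmult_1_r in Hb. lra.
  - destruct (poly_forward_difference c d h) as [c' [Hc' Hdiff]].
    assert (Hq : forall t, a <= t <= a + INR d * h -> Rabs (nsum (S d) (fun j => c' j * t ^ j)) <= 2 * B).
    { intros t Ht. rewrite <- Hdiff. rewrite S_INR in Hb.
      eapply Rle_trans; [apply Rabs_triang|]. rewrite Rabs_Ropp.
      pose proof (Hb (t + h) ltac:(lra)). pose proof (Hb t ltac:(pose proof (pos_INR d); nra)). lra. }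
    pose proof (IHd c' a h (2 * B) Hh Hq) as IH. rewrite Hc' in IH.
    rewrite fact_simpl, mult_INR. simpl (h ^ S d). simpl (2 ^ S d).
    rewrite !Rabs_mult, (Rabs_right (INR (S d))), (Rabs_right h) in IH by (apply Rle_ge; try apply pos_INR; lra).
    nra.
Qed.

Definition coef_const (D : nat) : R := 2 ^ D * INR (Nat.max D 1) ^ D / INR (fact D).

Lemma poly_coef_bound (c : nat -> R) D r B : 1 <= r ->
  (forall t, - r ^ 2 <= t <= 0 -> Rabs (nsum (S D) (fun d => c d * t ^ d)) <= B) ->
  Rabs (c D) * r ^ (2 * D) <= coef_const D * B.
Proof.
  intros Hr Hb.
  set (m := INR (Nat.max D 1)).
  assert (Hm : 1 <= m) by (unfold m; replace 1 with (INR 1) by reflexivity; apply le_INR; lia).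
  assert (HDm : INR D <= m) by (unfold m; apply le_INR; lia).
  assert (Hr2 : 1 <= r ^ 2) by (rewrite <- (pow1 2); apply pow_incr; lra).
  set (h := r ^ 2 / m).
  assert (Hh : 0 < h) by (unfold h; apply Rdiv_lt_0_compat; lra).
  assert (Hrange : - r ^ 2 + INR D * h <= 0).
  { unfold h. assert (HD : INR D * (r ^ 2 / m) <= m * (r ^ 2 / m)) by (apply Rmult_le_compat_r; [left; auto|auto]).
    replace (m * (r ^ 2 / m)) with (r ^ 2) in HD by (field; lra). lra. }
  pose proof (poly_top_coef_bound D c (- r ^ 2) h B Hh ltac:(intros t Ht; apply Hb; lra)) as Hfd.
  assert (Ehd : h ^ D * m ^ D = r ^ (2 * D)).
  { unfold h. rewrite pow_mult, <- Rpow_mult_distr. f_equal. field. lra. }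
  assert (Hf : 0 < INR (fact D)) by (apply lt_0_INR, lt_O_fact).
  assert (0 < m ^ D) by (apply pow_lt; lra).
  unfold coef_const. fold m. rewrite <- Ehd.
  apply (Rmult_le_reg_l (INR (fact D))); auto.
  replace (INR (fact D) * (2 ^ D * m ^ D / INR (fact D) * B)) with (2 ^ D * B * m ^ D) by (field; lra).
  replace (INR (fact D) * (Rabs (c D) * (h ^ D * m ^ D))) with (INR (fact D) * h ^ D * Rabs (c D) * m ^ D) by ring.
  apply Rmult_le_compat_r; lra.
Qed.

(** * Linear algebra *)

Lemma homogeneous_system_nontrivial (N : nat) : forall (eqs : list (nat -> R)), (length eqs < N)%nat ->
  exists a : nat -> R, (exists i, (i < N)%nat /\ a i <> 0) /\
    forall l, In l eqs -> nsum N (fun i => l i * a i) = 0.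
Proof.
  induction N as [|n IH]; intros eqs Hlen; [simpl in Hlen; lia|].
  destruct (classic (exists l0, In l0 eqs /\ l0 n <> 0)) as [[l0 [Hin Hnz]]|Hall].
  - destruct (in_split _ _ Hin) as [pre [post Heq]].
    set (eqs' := map (fun l => fun i => l i - l n / l0 n * l0 i) (pre ++ post)).
    assert (Hl' : (length eqs' < n)%nat).
    { unfold eqs'. rewrite length_map. rewrite Heq in Hlen. rewrite length_app in *. simpl in Hlen. lia. }
    destruct (IH eqs' Hl') as [b [[i [Hi Hbi]] Hb]].
    set (S0 := nsum n (fun i => l0 i * b i)).
    exists (fun i => if Nat.eq_dec i n then - S0 / l0 n else b i). split.
    + exists i. split. lia. destruct (Nat.eq_dec i n); [lia|auto].
    + intros l Hl. simpl. destruct (Nat.eq_dec n n) as [_|]; [|lia].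
      rewrite (nsum_ext n _ (fun i => l i * b i)) by (intros j Hj; destruct (Nat.eq_dec j n); [lia|auto]).
      rewrite Heq in Hl. apply in_app_or in Hl.
      assert (Hgen : In l (pre ++ post) -> nsum n (fun i => l i * b i) + l n * (- S0 / l0 n) = 0).
      { intros Hl2.
        assert (Hl2' : In (fun i => l i - l n / l0 n * l0 i) eqs')
          by (unfold eqs'; apply (in_map (fun l => fun i => l i - l n / l0 n * l0 i)); auto).
        specialize (Hb _ Hl2').
        rewrite (nsum_ext n _ (fun i => l i * b i - l n / l0 n * (l0 i * b i))) in Hb by (intros; ring).
        rewrite nsum_minus, nsum_scal in Hb. fold S0 in Hb.
        replace (l n * (- S0 / l0 n)) with (- (l n / l0 n * S0)) by (field; auto). lra. }
      destruct Hl as [Hl|[<-|Hl]].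
      * apply Hgen. apply in_or_app; auto.
      * fold S0. field. auto.
      * apply Hgen. apply in_or_app; auto.
  - exists (fun i => if Nat.eq_dec i n then 1 else 0). split.
    + exists n. split. lia. destruct (Nat.eq_dec n n); [lra|lia].
    + intros l Hl. simpl. destruct (Nat.eq_dec n n) as [_|]; [|lia].
      rewrite (nsum_ext n _ (fun _ => 0)) by (intros j Hj; destruct (Nat.eq_dec j n); [lia|ring]).
      rewrite nsum_zero.
      assert (Hln : l n = 0) by (destruct (Req_dec (l n) 0); auto; exfalso; apply Hall; exists l; auto).
      rewrite Hln. ring.
Qed.

Definition triangular {X : Type} (P : (X -> R) -> Prop) (n : nat) : Prop :=
  exists (f : nat -> X -> R) (p : nat -> X), (forall i, (i < n)%nat -> P (f i)) /\
    (forall i, (i < n)%nat -> f i (p i) <> 0) /\ (forall i j, (i < n)%nat -> (j < i)%nat -> f i (p j) = 0).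

Lemma triangular_indep {X : Type} (P : (X -> R) -> Prop) n : triangular P n -> has_indep (fun _ => True) P n.
Proof.
  intros [f [p [HS [Hnz Hz]]]]. exists f. split; auto.
  intros c Hc.
  assert (Hstep : forall i, (i < n)%nat -> (forall j, (j < i)%nat -> c j = 0) -> c i = 0).
  { intros i Hi Hlt. specialize (Hc (p i) I).
    rewrite (nsum_ext n _ (fun j => if Nat.eq_dec j i then c i * f i (p i) else 0)) in Hc.
    - rewrite nsum_single in Hc by lia.
      apply Rmult_integral in Hc as [|E]; [auto|]. exfalso; apply (Hnz i Hi E).
    - intros j Hj. destruct (Nat.eq_dec j i) as [->|Hne]; [reflexivity|].
      destruct (Nat.lt_ge_cases j i); [rewrite Hlt by auto|rewrite Hz by lia]; ring. }
  intros i. induction i as [i IH] using lt_wf_ind. intros Hi.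
  apply Hstep; auto. intros j Hj. apply IH; lia.
Qed.

Definition separating {X : Type} (P : (X -> R) -> Prop) (pts : list X) : Prop :=
  forall f, P f -> (forall x, In x pts -> f x = 0) -> forall x, f x = 0.

Lemma separating_or_triangular {X : Type} (P : (X -> R) -> Prop) n :
  (exists pts, (length pts <= n)%nat /\ separating P pts) \/ triangular P (S n).
Proof.
  induction n.
  - destruct (classic (separating P nil)) as [H|H]. left. exists nil. split; auto.
    right. unfold separating in H.
    apply not_all_ex_not in H. destruct H as [f H].
    apply imply_to_and in H. destruct H as [Hf H]. apply imply_to_and in H. destruct H as [_ H].
    apply not_all_ex_not in H. destruct H as [x Hx].
    exists (fun _ => f), (fun _ => x). repeat split; intros; auto. lia.
  - destruct IHn as [[pts [Hl Hs]]|[f [p [HS [Hnz Hz]]]]].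
    + left. exists pts. split; auto.
    + set (pts := map p (seq 0 (S n))).
      destruct (classic (separating P pts)) as [H|H].
      * left. exists pts. split; auto. unfold pts. rewrite length_map, length_seq. lia.
      * right. unfold separating in H.
        apply not_all_ex_not in H. destruct H as [g H].
        apply imply_to_and in H. destruct H as [Hg H]. apply imply_to_and in H. destruct H as [Hgz H].
        apply not_all_ex_not in H. destruct H as [x Hx].
        exists (fun i => if Nat.eq_dec i (S n) then g else f i), (fun i => if Nat.eq_dec i (S n) then x else p i).
        repeat split.
        -- intros i Hi. destruct (Nat.eq_dec i (S n)); auto. apply HS. lia.
        -- intros i Hi. destruct (Nat.eq_dec i (S n)); auto. apply Hnz. lia.
        -- intros i j Hi Hj. destruct (Nat.eq_dec i (S n)); destruct (Nat.eq_dec j (S n)); try lia.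
           ++ apply Hgz. unfold pts. apply in_map. apply in_seq. lia.
           ++ apply Hz; lia.
Qed.

(** * Vanishing of the time coefficients *)

Definition time_growth {V} (rho : V -> V -> R) (x0 : V) (U : V -> R -> R) (C a : R) : Prop :=
  forall r, 1 <= r -> forall x t, rho x x0 <= r -> - r ^ 2 <= t <= 0 -> Rabs (U x t) <= C * Rpower r a.

Definition time_coef {V} (G : wgraph V) (U : V -> R -> R) (d : nat) (x : V) : R :=
  lapn_at G U d x 0 / INR (fact d).

Lemma laplacian_time_coef {V} (G : wgraph V) U d y :
  laplacian G (time_coef G U d) y = INR (S d) * time_coef G U (S d) y.
Proof.
  unfold time_coef.
  rewrite (laplacian_ext G _ (fun z => / INR (fact d) * lapn_at G U d z 0 + 0 * lapn_at G U d z 0))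
    by (intros; unfold Rdiv; ring).
  rewrite laplacian_lin. change (laplacian G (fun z => lapn_at G U d z 0) y) with (lapn_at G U (S d) y 0).
  rewrite fact_simpl, mult_INR. pose proof (INR_fact_neq_0 d). pose proof (pos_INR d).
  rewrite S_INR. field. split; auto; lra.
Qed.

Lemma ancient_time_expansion {V} (G : wgraph V) (U : V -> R -> R) J :
  iterated_heat G U 0 -> (forall j x, left_cont0 (lapn_at G U j x)) ->
  (forall x t, t < 0 -> lapn_at G U J x t = 0) ->
  forall x t, t <= 0 -> U x t = nsum J (fun d => time_coef G U d x * t ^ d).
Proof.
  intros Hd Hcl HJ x t Ht. transitivity (lapn_at G U 0 x t); [reflexivity|].
  rewrite (finite_taylor_left (fun j t => lapn_at G U j x t) J (fun j t Ht => Hd j x t Ht)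
             (fun j => Hcl j x) (fun t Ht => HJ x t Ht) J 0 ltac:(lia) t Ht).
  apply nsum_ext. intros d _. unfold time_coef, Rdiv. rewrite Nat.add_0_l. ring.
Qed.

Lemma Rpower_pos x y : 0 < Rpower x y.
Proof. apply exp_pos. Qed.

Lemma Rpower_1_base y : Rpower 1 y = 1.
Proof. unfold Rpower. rewrite ln_1, Rmult_0_r. apply exp_0. Qed.

Lemma in_H_of_growth {V} (G : wgraph V) rho (x0 : V) (f : V -> R) C a : 0 <= a ->
  (forall y, laplacian G f y = 0) ->
  (forall y r, 1 <= r -> rho y x0 <= r -> Rabs (f y) <= C * Rpower r a) -> in_H G rho a f.
Proof.
  intros Ha Hharm Hb. split; auto. exists x0, (Rabs C). intros r Hr y Hy. unfold in_ball in Hy.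
  set (R := Rmax r 1). assert (HR1 : 1 <= R) by apply Rmax_r. assert (HRr : r <= R) by apply Rmax_l.
  eapply Rle_trans; [apply (Hb y R HR1); lra|].
  apply Rle_trans with (Rabs C * Rpower R a); [apply Rmult_le_compat_r; [left; apply Rpower_pos|apply Rle_abs]|].
  apply Rmult_le_compat_l; [apply Rabs_pos|]. apply Rle_Rpower_l; auto. unfold R, Rmax; destruct Rle_dec; lra.
Qed.

Lemma le_0_of_le_rpower_neg (X C r1 e : R) : 0 < e ->
  (forall r, r1 <= r -> 1 <= r -> X <= C * Rpower r (- e)) -> X <= 0.
Proof.
  intros He H. destruct (Rle_dec X 0) as [|Hn]; auto. exfalso. apply Rnot_le_lt in Hn.
  set (y := Rabs C / X + 1).
  assert (0 <= Rabs C / X) by (apply Rdiv_le_0_compat; [apply Rabs_pos|auto]).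
  assert (Hy : 1 <= y) by (unfold y; lra).
  set (r := Rmax r1 (Rmax 1 (Rpower y (/ e)))).
  assert (H1 : r1 <= r) by apply Rmax_l.
  assert (H2 : 1 <= r) by (eapply Rle_trans; [|apply Rmax_r]; apply Rmax_l).
  assert (H3 : Rpower y (/ e) <= r) by (eapply Rle_trans; [|apply Rmax_r]; apply Rmax_r).
  specialize (H r H1 H2).
  assert (HRe : y <= Rpower r e).
  { replace y with (Rpower (Rpower y (/ e)) e).
    - apply Rle_Rpower_l; [lra|split; auto; apply Rpower_pos].
    - rewrite Rpower_mult, Rinv_l by lra. apply Rpower_1. lra. }
  rewrite Rpower_Ropp in H. pose proof (Rpower_pos r e).
  assert (C * / Rpower r e <= Rabs C / y).
  { apply Rle_trans with (Rabs C * / Rpower r e).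
    - apply Rmult_le_compat_r; [left; apply Rinv_0_lt_compat; auto|apply Rle_abs].
    - unfold Rdiv. apply Rmult_le_compat_l; [apply Rabs_pos|apply Rinv_le_contravar; lra]. }
  assert (Rabs C / y < X); [|lra].
  apply (Rmult_lt_reg_r y); [lra|]. replace (Rabs C / y * y) with (Rabs C) by (field; lra).
  unfold y. replace (X * (Rabs C / X + 1)) with (Rabs C + X) by (field; lra). lra.
Qed.

Lemma zero_of_growth_gap (X C r1 a : R) (D : nat) : a < 2 * INR D ->
  (forall r, r1 <= r -> 1 <= r -> Rabs X * r ^ (2 * D) <= C * Rpower r a) -> X = 0.
Proof.
  intros Ha Hb.
  assert (Rabs X <= 0); [|pose proof (Rabs_pos X); apply Rabs_eq_0; lra].
  apply (le_0_of_le_rpower_neg _ C r1 (2 * INR D - a)); [lra|]. intros r Hr Hr1.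
  assert (HrD : r ^ (2 * D) = Rpower r (2 * INR D))
    by (rewrite <- Rpower_pow by lra; f_equal; rewrite mult_INR; simpl; ring).
  assert (0 < r ^ (2 * D)) by (apply pow_lt; lra).
  replace (C * Rpower r (- (2 * INR D - a))) with (C * Rpower r a / r ^ (2 * D)).
  - apply (Rmult_le_reg_r (r ^ (2 * D))); auto. field_simplify; [apply Hb; auto|lra].
  - rewrite HrD, Ropp_minus_distr. unfold Rminus. rewrite Rpower_plus, Rpower_Ropp.
    field. apply Rgt_not_eq, Rpower_pos.
Qed.

(* Descending induction on the degree: once the coefficients above [d] vanish, the [d]-th one is
   harmonic and, by [poly_coef_bound], grows at most like [r^(2k - 2d)]: it is killed by the gap
   when [d > k], and lies in [H_2k] and vanishes on [pts] when [d <= k]. *)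
Lemma time_coefs_vanish {V} (G : wgraph V) rho (x0 : V) (U : V -> R -> R) (c : nat -> V -> R) J K CU k pts :
  0 <= k -> k < INR K + 1 ->
  (forall x t, t <= 0 -> U x t = nsum J (fun d => c d x * t ^ d)) -> time_growth rho x0 U CU (2 * k) ->
  (forall d y, laplacian G (c d) y = INR (S d) * c (S d) y) -> (forall y, c J y = 0) ->
  separating (in_H G rho (2 * k)) pts -> (forall d x, (d <= K)%nat -> In x pts -> c d x = 0) ->
  forall d x, (d <= J)%nat -> c d x = 0.
Proof.
  intros Hk HK Hexp HU Hlap Htop Hsep Hpts.
  assert (Z : forall m d, (J - m <= d <= J)%nat -> forall x, c d x = 0).
  { induction m; intros d Hd x.
    { replace d with J by lia. apply Htop. }
    destruct (le_lt_dec (J - m) d) as [Hge|Hlt]; [apply IHm; lia|].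
    assert (Hpoly : forall y t, t <= 0 -> U y t = nsum (S d) (fun e => c e y * t ^ e)).
    { intros y t Ht. rewrite Hexp by auto. apply nsum_truncate; [lia|].
      intros e He1 He2. rewrite (IHm e) by lia. ring. }
    assert (Hb : forall y r, 1 <= r -> rho y x0 <= r ->
                 Rabs (c d y) * r ^ (2 * d) <= coef_const d * CU * Rpower r (2 * k)).
    { intros y r Hr Hy. rewrite Rmult_assoc. apply (poly_coef_bound (fun e => c e y)); auto.
      intros t Ht. rewrite <- Hpoly by lra. apply HU; auto. }
    destruct (Rle_lt_dec (INR d) k) as [Hdk|Hdk].
    - assert (HdK : (d <= K)%nat).
      { assert (HdSK : INR d < INR (S K)) by (rewrite S_INR; lra). apply INR_lt in HdSK. lia. }
      apply (Hsep (c d)); [|intros; apply Hpts; auto].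
      apply (in_H_of_growth G rho x0 _ (coef_const d * CU)); [lra| |].
      + intros y. rewrite Hlap, (IHm (S d)) by lia. ring.
      + intros y r Hr Hy. apply Rle_trans with (Rabs (c d y) * r ^ (2 * d)); [|apply Hb; auto].
        rewrite <- (Rmult_1_r (Rabs (c d y))) at 1.
        apply Rmult_le_compat_l; [apply Rabs_pos|apply pow_R1_Rle; lra].
    - apply (zero_of_growth_gap _ (coef_const d * CU) (rho x x0) (2 * k) d); [lra|].
      intros r Hr Hr1. apply Hb; auto. }
  intros d x Hd. apply (Z J). lia.
Qed.

Lemma nat_above (x : R) : exists n : nat, x < INR n.
Proof.
  destruct (archimed x) as [H1 _]. destruct (Z_le_gt_dec 0 (up x)) as [H|H].
  - exists (Z.to_nat (up x)). rewrite INR_IZR_INZ, Z2Nat.id by auto. lra.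
  - exists 0%nat. simpl. apply Z.gt_lt, IZR_lt in H. lra.
Qed.

Lemma nat_floor (k : R) : 0 <= k -> exists K : nat, INR K <= k < INR K + 1.
Proof.
  intros Hk. destruct (nat_above k) as [n Hn]. induction n.
  - simpl in Hn. lra.
  - destruct (Rlt_le_dec k (INR n)); auto. exists n. rewrite S_INR in Hn. lra.
Qed.

Lemma ancient_zero_of_vanishing_at_pts {V} (G : wgraph V) rho s (x0 : V) BL (U : V -> R -> R) k Cv p CU K pts :
  intrinsic_metric G rho -> 1 <= s -> (forall x y, adj G x y -> rho x y <= s) -> ball_lists rho x0 BL ->
  (forall r, 1 <= r -> lsum (vm G) (BL r) <= Cv * r ^ p) -> time_growth rho x0 U CU (2 * k) ->
  0 <= k -> k < INR K + 1 -> ancient_solution G U -> separating (in_H G rho (2 * k)) pts ->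
  (forall d x, (d <= K)%nat -> In x pts -> lapn_at G U d x 0 = 0) ->
  forall x t, t <= 0 -> U x t = 0.
Proof.
  intros HI Hs Hj HBL HV HU Hk HK Hanc Hsep Hpts.
  pose proof (ancient_iterated_heat G U Hanc) as Hd.
  pose proof (ancient_left_cont0 G U Hanc) as Hcl.
  destruct (nat_above (2 * k)) as [q Hkq].
  assert (HUq : forall r, 1 <= r -> forall x t, rho x x0 <= r -> - r ^ 2 <= t <= 0 -> Rabs (U x t) <= CU * r ^ q).
  { assert (HCU : 0 <= CU).
    { destruct HI as [_ [Hz _]]. pose proof (HU 1 ltac:(lra) x0 0 ltac:(rewrite Hz; lra) ltac:(lra)) as H.
      rewrite Rpower_1_base in H. pose proof (Rabs_pos (U x0 0)). lra. }
    intros r Hr x t Hx Ht. apply Rle_trans with (CU * Rpower r (2 * k)); [apply HU; auto|].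
    apply Rmult_le_compat_l; auto. rewrite <- Rpower_pow by lra. apply Rle_Rpower; lra. }
  set (J := (3 + p + 2 * q)%nat).
  pose proof (lapn_vanish V G rho s x0 BL HI Hs Hj HBL U Cv p CU q J Hd HV HUq ltac:(unfold J; lia)) as Hvan.
  pose proof (ancient_time_expansion G U J Hd Hcl Hvan) as Hexp.
  assert (Hz : forall d x, (d <= J)%nat -> time_coef G U d x = 0).
  { apply (time_coefs_vanish G rho x0 U (time_coef G U) J K CU k pts); auto.
    - apply laplacian_time_coef.
    - intros y. unfold time_coef. rewrite (left_cont0_zero _ (Hcl J y) (Hvan y)). apply Rdiv_0_l.
    - intros d x Hd' Hx. unfold time_coef. rewrite Hpts by auto. apply Rdiv_0_l. }
  intros x t Ht. rewrite Hexp by auto. rewrite <- (nsum_zero J). apply nsum_ext.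
  intros d Hd'. rewrite Hz by lia. ring.
Qed.

(** * Counting dimensions *)

Lemma ancient_solution_nsum {V} (G : wgraph V) N (a : nat -> R) (u : nat -> V -> R -> R) :
  (forall i, (i < N)%nat -> ancient_solution G (u i)) ->
  ancient_solution G (fun x t => nsum N (fun i => a i * u i x t)).
Proof.
  intros H x t Ht. cbv beta zeta.
  rewrite (laplacian_nsum G N a (fun i y => u i y t) x).
  assert (Hq : forall h, (nsum N (fun i => a i * u i x (t + h)) - nsum N (fun i => a i * u i x t)) / h
                        = nsum N (fun i => a i * ((u i x (t + h) - u i x t) / h))).
  { intros h. rewrite <- nsum_minus. unfold Rdiv. rewrite Rmult_comm, <- nsum_scal. apply nsum_ext. intros; ring. }
  split; [|intros Hlt];
    (eapply filterlim_ext; [intros h; symmetry; apply Hq|]);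
    apply (filterlim_nsum (fun i h => a i * ((u i x (t + h) - u i x t) / h))); intros i Hi;
    apply filterlim_Rscal; apply (H i Hi x t Ht); auto.
Qed.

Lemma in_P_time_growth {V} (G : wgraph V) rho (x0 : V) k (u : V -> R -> R) :
  intrinsic_metric G rho -> 0 <= k -> in_P G rho (2 * k) u -> exists C, time_growth rho x0 u C (2 * k).
Proof.
  intros [Hn [_ [_ [Htri _]]]] Hk [_ [xi [Ci HC]]].
  set (d := rho x0 xi). assert (Hd : 0 <= d) by apply Hn.
  exists (Rabs Ci * Rpower (2 + d) (2 * k)). intros r Hr x t Hx Ht.
  assert (in_ball rho xi (r + d) x) by (unfold in_ball; pose proof (Htri x x0 xi); unfold d; lra).
  assert (- (r + d) ^ 2 <= t <= 0) by nra.
  eapply Rle_trans; [apply (HC (r + d)); auto; lra|].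
  apply Rle_trans with (Rabs Ci * Rpower (1 + (r + d)) (2 * k)).
  { apply Rmult_le_compat_r; [left; apply Rpower_pos|apply Rle_abs]. }
  rewrite Rmult_assoc. apply Rmult_le_compat_l; [apply Rabs_pos|].
  rewrite Rpower_mult_distr by lra. apply Rle_Rpower_l; [lra|split; nra].
Qed.

Lemma time_growth_nsum {V} (rho : V -> V -> R) (x0 : V) a N (u : nat -> V -> R -> R) (C : nat -> R) e :
  (forall i, (i < N)%nat -> time_growth rho x0 (u i) (C i) e) ->
  time_growth rho x0 (fun x t => nsum N (fun i => a i * u i x t)) (nsum N (fun i => Rabs (a i) * C i)) e.
Proof.
  intros HC r Hr x t Hx Ht.
  eapply Rle_trans; [apply nsum_abs|]. rewrite Rmult_comm, <- nsum_scal. apply nsum_le. intros i Hi.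
  rewrite Rabs_mult. replace (Rpower r e * (Rabs (a i) * C i)) with (Rabs (a i) * (C i * Rpower r e)) by ring.
  apply Rmult_le_compat_l; [apply Rabs_pos|apply HC; auto].
Qed.

Lemma volume_growth_nat {V} (G : wgraph V) rho (x0 : V) BL alpha Cv : ball_lists rho x0 BL ->
  (forall r, 0 < r -> forall l : list V, NoDup l -> (forall y, In y l <-> in_ball rho x0 r y) ->
     lsum (vm G) l <= Cv * Rpower (1 + r) alpha) ->
  exists (Cv' : R) (p : nat), forall r, 1 <= r -> lsum (vm G) (BL r) <= Cv' * r ^ p.
Proof.
  intros HBL Hv. destruct (nat_above alpha) as [p Hp].
  exists (Rabs Cv * 2 ^ p), p. intros r Hr. destruct (HBL r ltac:(lra)) as [ND H].
  eapply Rle_trans; [apply (Hv r ltac:(lra) (BL r) ND); intros y; rewrite H; unfold in_ball; tauto|].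
  eapply Rle_trans; [apply Rmult_le_compat_r; [left; apply Rpower_pos|apply Rle_abs]|].
  rewrite Rmult_assoc. apply Rmult_le_compat_l; [apply Rabs_pos|].
  rewrite <- Rpow_mult_distr, <- Rpower_pow by lra.
  eapply Rle_trans; [apply Rle_Rpower; [lra|left; apply Hp]|].
  apply Rle_Rpower_l; [apply pos_INR|lra].
Qed.

Lemma ball_lists_exist {V} (rho : V -> V -> R) (x0 : V) : finite_balls rho -> exists BL, ball_lists rho x0 BL.
Proof.
  intros Hfb.
  destruct (choice (fun (r : R) (l : list V) => 0 < r -> NoDup l /\ forall y, In y l <-> rho y x0 <= r))
    as [BL HBL].
  - intros r. destruct (Rlt_le_dec 0 r) as [Hr|Hr]; [|exists nil; intros; lra].
    destruct (Hfb x0 r Hr) as [l0 Hl0].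
    exists (nodup (fun a b => excluded_middle_informative (a = b))
                  (filter (fun y => if Rle_dec (rho y x0) r then true else false) l0)).
    intros _. split; [apply NoDup_nodup|]. intros y. rewrite nodup_In, filter_In.
    destruct (Rle_dec (rho y x0) r) as [Hy|Hy]; split.
    + tauto.
    + intros _. split; [apply Hl0|]; auto.
    + intros [_ E]; discriminate.
    + tauto.
  - exists BL. intros r Hr. apply HBL, Hr.
Qed.

Lemma length_flat_map_seq {A B} (g : nat -> A -> B) (l : list A) n :
  length (flat_map (fun d => map (g d) l) (seq 0 n)) = (n * length l)%nat.
Proof. generalize 0%nat. induction n; intros m; simpl; auto. rewrite length_app, length_map, IHn. lia. Qed.

(* With [K = floor k], the values [Lap^d u (y, 0)], [d <= K], [y] in [pts], form [(K+1) |pts|]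
   linear conditions; a combination of more independent solutions satisfying them all vanishes. *)
Lemma indep_P_le {V} (G : wgraph V) rho k K (pts : list V) N :
  intrinsic_metric G rho -> finite_balls rho -> finite_jump_size G rho -> polynomial_volume_growth G rho ->
  0 <= k -> k < INR K + 1 -> separating (in_H G rho (2 * k)) pts ->
  has_indep (@spacetime_dom V) (P_space G rho (2 * k)) N -> (N <= S K * length pts)%nat.
Proof.
  intros HI Hfb [s0 Hs0] [x0 [alpha [Cv Hv]]] Hk HK Hsep [f [HfP Hind]].
  destruct (le_lt_dec N (S K * length pts)) as [|Hlt]; auto. exfalso.
  destruct (ball_lists_exist rho x0 Hfb) as [BL HBL].
  destruct (volume_growth_nat G rho x0 BL alpha Cv HBL Hv) as [Cv' [p HV]].
  destruct (choice (fun i (u : V -> R -> R) => (i < N)%nat ->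
              in_P G rho (2 * k) u /\ forall pt, spacetime_dom pt -> f i pt = u (fst pt) (snd pt))) as [u Hu].
  { intros i. destruct (lt_dec i N) as [Hi|Hi]; [destruct (HfP i Hi) as [u Hu]; exists u; auto|].
    exists (fun _ _ => 0). intros; lia. }
  destruct (choice (fun i C => (i < N)%nat -> time_growth rho x0 (u i) C (2 * k))) as [C HC].
  { intros i. destruct (lt_dec i N) as [Hi|Hi]; [|exists 0; intros; lia].
    destruct (in_P_time_growth G rho x0 k (u i) HI Hk (proj1 (Hu i Hi))) as [Ci HCi]. exists Ci; auto. }
  set (eqs := flat_map (fun d => map (fun y i => lapn_at G (u i) d y 0) pts) (seq 0 (S K))).
  destruct (homogeneous_system_nontrivial N eqs) as [a [[i0 [Hi0 Ha0]] Ha]];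
    [unfold eqs; rewrite length_flat_map_seq; lia|].
  set (U := fun x t => nsum N (fun i => a i * u i x t)).
  assert (Hz : forall x t, t <= 0 -> U x t = 0).
  { apply (ancient_zero_of_vanishing_at_pts G rho (Rmax s0 1) x0 BL U k Cv' p
             (nsum N (fun i => Rabs (a i) * C i)) K pts); auto.
    - apply Rmax_r.
    - intros x y A. eapply Rle_trans; [apply Hs0; auto|apply Rmax_l].
    - apply time_growth_nsum. intros; apply HC; auto.
    - apply ancient_solution_nsum. intros; apply Hu; auto.
    - intros d x Hd Hx. unfold lapn_at, U. rewrite (lapn_nsum G d N a (fun i y => u i y 0)).
      transitivity (nsum N (fun i => lapn_at G (u i) d x 0 * a i)).
      + apply nsum_ext. intros. unfold lapn_at. ring.
      + apply (Ha (fun i => lapn_at G (u i) d x 0)).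
        unfold eqs. apply in_flat_map. exists d. split; [apply in_seq; lia|].
        apply (in_map (fun y i => lapn_at G (u i) d y 0)); auto. }
  apply Ha0, Hind; auto. intros pt Hpt.
  rewrite <- (Hz (fst pt) (snd pt) Hpt). apply nsum_ext. intros i Hi. destruct (Hu i Hi) as [_ ->]; auto.
Qed.

Lemma has_indep_0 {X} (D : X -> Prop) S : has_indep D S 0.
Proof. exists (fun _ _ => 0). split; intros; lia. Qed.

Lemma nat_last_true (Q : nat -> Prop) n : Q 0%nat -> ~ Q n -> exists m, Q m /\ ~ Q (S m).
Proof.
  induction n; intros H0 Hn; [contradiction|].
  destruct (classic (Q n)); [exists n; auto|apply IHn; auto].
Qed.

Theorem theorem1p2 (V : Type) (G : wgraph V) (rho : V -> V -> R) :
  intrinsic_metric G rho ->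
  finite_balls rho ->
  finite_jump_size G rho ->
  polynomial_volume_growth G rho ->
  forall k : R, 1 <= k ->
    dim_le_mul (@spacetime_dom V) (P_space G rho (2 * k)) (k + 1)
               (fun _ : V => True) (in_H G rho (2 * k)).
Proof.
  intros HI Hfb Hj Hv k Hk N HN.
  set (Hdim := has_indep (fun _ : V => True) (in_H G rho (2 * k))).
  destruct (classic (forall M, Hdim M)) as [Hall|Hnot].
  { exists N. split; auto. pose proof (pos_INR N). nra. }
  apply not_all_ex_not in Hnot as [n Hn].
  destruct (nat_last_true Hdim n (has_indep_0 _ _) Hn) as [M [HM HM1]].
  destruct (separating_or_triangular (in_H G rho (2 * k)) M) as [[pts [Hlen Hsep]]|Htri];
    [|exfalso; apply HM1, triangular_indep, Htri].
  exists M. split; auto.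
  destruct (nat_floor k) as [K [HK1 HK2]]; [lra|].
  pose proof (indep_P_le G rho k K pts N HI Hfb Hj Hv ltac:(lra) HK2 Hsep HN) as HNK.
  assert (HNM : INR N <= INR (S K) * INR M) by (rewrite <- mult_INR; apply le_INR; nia).
  rewrite S_INR in HNM. pose proof (pos_INR M). nra.
Qed.
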